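(* For multi-indices $\alpha,\beta$ there is $C=C(\alpha,\beta,\iota,\Omega)$ such that for every smooth function $f$ on $\Omega$ and $k=1,2,3$, $$\Big|\partial^\alpha\bar\partial^\beta\big(\sigma^{-\iota}\partial_k(\sigma^{\iota+1}f)\big)-\sigma^{-\iota-|\alpha|}\partial_k\big(\sigma^{\iota+|\alpha|+1}\partial^\alpha\bar\partial^\beta f\big)\Big|\le C\sum_{0\le j\le|\beta|-1}\Big(\sigma|\partial^{|\alpha|+1}\bar\partial^jf|+|\partial^{|\alpha|}\bar\partial^jf|\Big)+C|\alpha|\sum_{0\le j\le|\beta|+1}|\partial^{|\alpha|-1}\bar\partial^jf| .$$
   Context: $\iota>0$ is a fixed real number ($\iota=1/(\gamma-1)$, $\gamma>1$). $\underline A,\underline B>0$, $\Omega\subset\mathbb R^3$ is the open ball centered at $0$ of radius $\sqrt{\underline A/\underline B}$, $\sigma(y)=\underline A-\underline B|y|^2$. $\partial_k=\partial/\partial y_k$; $\bar\partial_i=\epsilon^{ijk}y_j\partial_k$; $\partial^\alpha,\bar\partial^\beta$ multi-index powers; for integers $a,b\ge0$, $|\partial^a\bar\partial^bf|=\sum_{|\alpha'|=a,|\beta'|=b}|\partial^{\alpha'}\bar\partial^{\beta'}f|$ (empty sums are $0$). *)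

From Stdlib Require Import Reals List ClassicalEpsilon.
Import ListNotations.
Open Scope R_scope.

(* Points of R^3; coordinates indexed 1,2,3 as in the paper. *)
Definition pt := (R * R * R)%type.

Definition coord (y : pt) (i : nat) : R :=
  match y with (a, b, c) =>
    match i with 1%nat => a | 2%nat => b | 3%nat => c | _ => 0 end end.

Definition shift (y : pt) (k : nat) (t : R) : pt :=
  match y with (a, b, c) =>
    match k with
    | 1%nat => (a + t, b, c) | 2%nat => (a, b + t, c) | 3%nat => (a, b, c + t)
    | _ => (a, b, c) end end.

(* partial derivative d/dy_k (the derivative value, chosen classically;
   it is the genuine partial derivative wherever that exists) *)
Definition pd (k : nat) (f : pt -> R) : pt -> R :=
  fun y => epsilon (inhabits 0)
             (fun l => derivable_pt_lim (fun t => f (shift y k t)) 0 l).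

Definition levi (i j k : nat) : R :=
  match i, j, k with
  | 1%nat, 2%nat, 3%nat => 1 | 2%nat, 3%nat, 1%nat => 1 | 3%nat, 1%nat, 2%nat => 1
  | 1%nat, 3%nat, 2%nat => -1 | 3%nat, 2%nat, 1%nat => -1 | 2%nat, 1%nat, 3%nat => -1
  | _, _, _ => 0 end.

Definition idx3 : list nat := [1%nat; 2%nat; 3%nat].

Definition sumR {A : Type} (F : A -> R) (l : list A) : R :=
  fold_right (fun a acc => F a + acc) 0 l.

Definition pdbar (i : nat) (f : pt -> R) : pt -> R :=
  fun y => sumR (fun j => sumR (fun k => levi i j k * coord y j * pd k f y) idx3) idx3.

Definition mindex := (nat * nat * nat)%type.
Definition msize (a : mindex) : nat := let '(a1, a2, a3) := a in (a1 + a2 + a3)%nat.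

Definition pow_op (D : (pt -> R) -> (pt -> R)) (n : nat) (f : pt -> R) := Nat.iter n D f.

Definition pd_multi (a : mindex) (f : pt -> R) : pt -> R :=
  let '(a1, a2, a3) := a in pow_op (pd 1) a1 (pow_op (pd 2) a2 (pow_op (pd 3) a3 f)).
Definition pdbar_multi (b : mindex) (f : pt -> R) : pt -> R :=
  let '(b1, b2, b3) := b in
  pow_op (pdbar 1) b1 (pow_op (pdbar 2) b2 (pow_op (pdbar 3) b3 f)).

Definition mixed (a b : mindex) (f : pt -> R) : pt -> R := pd_multi a (pdbar_multi b f).

Definition mindices (n : nat) : list mindex :=
  flat_map (fun i => map (fun j => (i, j, (n - i - j)%nat)) (seq 0 (S (n - i))))
           (seq 0 (S n)).

(* |partial^a bar-partial^b f|(y) = sum over |a'|=a, |b'|=b *)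
Definition abs_mixed (a b : nat) (f : pt -> R) (y : pt) : R :=
  sumR (fun al => sumR (fun be => Rabs (mixed al be f y)) (mindices b)) (mindices a).

Definition normsq (y : pt) : R := coord y 1 ^ 2 + coord y 2 ^ 2 + coord y 3 ^ 2.

Definition sig_ (A B : R) (y : pt) : R := A - B * normsq y.

Definition in_Omega (A B : R) (y : pt) : Prop := normsq y < A / B.

Definition dist3 (y z : pt) : R :=
  sqrt ((coord y 1 - coord z 1) ^ 2 + (coord y 2 - coord z 2) ^ 2
        + (coord y 3 - coord z 3) ^ 2).

Definition iter_pd (l : list nat) (f : pt -> R) : pt -> R :=
  fold_right (fun k g => pd k g) f l.

Definition smooth_on (A B : R) (f : pt -> R) : Prop :=
  forall l : list nat,
    (forall y, in_Omega A B y -> forall k, (1 <= k <= 3)%nat ->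
       exists d, derivable_pt_lim (fun t => iter_pd l f (shift y k t)) 0 d) /\
    (forall y, in_Omega A B y -> forall e, 0 < e -> exists del, 0 < del /\
       forall z, in_Omega A B z -> dist3 z y < del ->
         Rabs (iter_pd l f z - iter_pd l f y) < e).

From Stdlib Require Import Reals List Permutation Lra Lia ClassicalEpsilon FunctionalExtensionality PropExtensionality.
From Coquelicot Require Import Coquelicot.
Import ListNotations.
Open Scope R_scope.

(* Write T_q g := sigma^(-q) pd_k (sigma^(q+1) g) = (q+1) (-2B) y_k g + sigma pd_k g.
   Moving pdbar_i through T_q costs only lower-order terms, since pdbar_i sigma = 0 while
   pdbar_i y_k and [pdbar_i, pd_k] = -eps_ikl pd_l are tame; moving pd_m through T_q turns it
   into T_(q+1), up to pd_m y_k and pd_m sigma = -2B y_m, where y_m pd_k - y_k pd_m is a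
   combination of the pdbar_n. What remains is a sum of terms (1, y_j or sigma) * (word in pd,
   pdbar) f with one pd or one pdbar fewer than the main term. The relations [pd_m, pd_n] = 0
   (the symmetry of second derivatives of the smooth f) and [pdbar_i, pdbar_j] = -eps_ijn
   pdbar_n rewrite every word as a fixed linear combination of normally ordered words
   pd^a pdbar^b with the same number of pd's and no more pdbar's, which gives the bound. *)

Definition axis (k : nat) := (1 <= k <= 3)%nat.

Definition eq_on (U : pt -> Prop) (F G : pt -> R) := forall y, U y -> F y = G y.

Definition is_open (U : pt -> Prop) := forall y, U y -> exists d, 0 < d /\ forall z,
  Rabs (coord z 1 - coord y 1) < d -> Rabs (coord z 2 - coord y 2) < d ->
  Rabs (coord z 3 - coord y 3) < d -> U z.

Lemma axis1 : axis 1. Proof. unfold axis; lia. Qed.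
Lemma axis2 : axis 2. Proof. unfold axis; lia. Qed.
Lemma axis3 : axis 3. Proof. unfold axis; lia. Qed.
#[local] Hint Resolve axis1 axis2 axis3 : core.

Lemma axis_cases k : axis k -> k = 1%nat \/ k = 2%nat \/ k = 3%nat.
Proof. unfold axis; lia. Qed.

Lemma axis_idx3 k : In k idx3 -> axis k.
Proof. unfold idx3, axis; simpl; intuition lia. Qed.

Lemma coord_shift y k t j : axis k -> axis j ->
  coord (shift y k t) j = coord y j + (if Nat.eqb j k then t else 0).
Proof.
  intros Hk Hj; destruct y as [[a b] c].
  destruct (axis_cases k Hk) as [?|[?|?]]; destruct (axis_cases j Hj) as [?|[?|?]]; subst;
  simpl; ring.
Qed.

Lemma shift_not_axis y k t : ~ axis k -> shift y k t = y.
Proof.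
  intros H; destruct y as [[a b] c]; unfold axis in H.
  destruct k as [|[|[|[|k]]]]; simpl; auto; lia.
Qed.

Lemma shift0 y k : shift y k 0 = y.
Proof.
  destruct y as [[a b] c]; destruct k as [|[|[|[|k]]]]; simpl; auto; rewrite ?Rplus_0_r; auto.
Qed.

Lemma pt_ext (y z : pt) :
  coord y 1 = coord z 1 -> coord y 2 = coord z 2 -> coord y 3 = coord z 3 -> y = z.
Proof. destruct y as [[a b] c], z as [[a' b'] c']; simpl; intros; subst; auto. Qed.

Lemma shift_shift p k a b : shift (shift p k a) k b = shift p k (a + b).
Proof.
  destruct (classic (axis k)) as [Hk|Hk]; [|rewrite !shift_not_axis; auto].
  apply pt_ext; rewrite ?coord_shift by auto; destruct (Nat.eqb _ k); ring.
Qed.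

Lemma shift_comm p m n a b : shift (shift p m a) n b = shift (shift p n b) m a.
Proof.
  destruct (classic (axis m)) as [Hm|Hm]; [|rewrite !(shift_not_axis _ m) by auto; auto].
  destruct (classic (axis n)) as [Hn|Hn]; [|rewrite !(shift_not_axis _ n) by auto; auto].
  apply pt_ext; rewrite ?coord_shift by auto; destruct (Nat.eqb _ m), (Nat.eqb _ n); ring.
Qed.

Lemma open_shift U y k : is_open U -> U y ->
  exists d, 0 < d /\ forall t, Rabs t < d -> U (shift y k t).
Proof.
  intros HU Hy. destruct (HU y Hy) as [d [Hd H]]. exists d; split; auto.
  intros s Hs. destruct (classic (axis k)) as [Hk|Hk]; [|rewrite shift_not_axis; auto].
  assert (Hc : forall j, axis j -> Rabs (coord (shift y k s) j - coord y j) < d).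
  { intros j Hj. rewrite coord_shift by auto. destruct (Nat.eqb j k);
    [replace (_ + s - _) with s by ring | replace (_ + 0 - _) with 0 by ring; rewrite Rabs_R0];
    auto. }
  apply H; auto.
Qed.

Lemma pd_eq F y k l : derivable_pt_lim (fun t => F (shift y k t)) 0 l -> pd k F y = l.
Proof.
  intros H. unfold pd.
  assert (Hex : exists l, derivable_pt_lim (fun t => F (shift y k t)) 0 l) by eauto.
  eapply uniqueness_limite; [|exact H]. exact (epsilon_spec (inhabits 0) _ Hex).
Qed.

Lemma derivable_pt_lim_eq_on U y k F G l : is_open U -> U y -> eq_on U F G ->
  derivable_pt_lim (fun t => F (shift y k t)) 0 l ->
  derivable_pt_lim (fun t => G (shift y k t)) 0 l.
Proof.
  intros HU Hy HE H. apply is_derive_Reals. apply is_derive_Reals in H.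
  eapply is_derive_ext_loc; [|exact H].
  destruct (open_shift U y k HU Hy) as [d [Hd Hs]].
  exists (mkposreal d Hd). intros t Ht. apply HE, Hs.
  change (Rabs (t - 0) < d) in Ht. rewrite Rminus_0_r in Ht. exact Ht.
Qed.

Lemma pd_local U F G k y : is_open U -> eq_on U F G -> U y -> pd k F y = pd k G y.
Proof.
  intros HU HE Hy. unfold pd. f_equal. apply functional_extensionality; intro l.
  apply propositional_extensionality; split; apply derivable_pt_lim_eq_on with U; auto.
  intros z Hz; symmetry; auto.
Qed.

Lemma eq_on_pd U F G k : is_open U -> eq_on U F G -> eq_on U (pd k F) (pd k G).
Proof. intros HU HE y Hy; eapply pd_local; eauto. Qed.

Lemma eq_on_iter_pd U F G l : is_open U -> eq_on U F G ->
  eq_on U (iter_pd l F) (iter_pd l G).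
Proof. intros HU HE; induction l; simpl; auto. apply eq_on_pd; auto. Qed.

Lemma eq_on_pdbar U F G i : is_open U -> eq_on U F G -> eq_on U (pdbar i F) (pdbar i G).
Proof.
  intros HU HE y Hy; unfold pdbar, sumR, idx3; simpl.
  rewrite !(pd_local U F G _ y HU HE Hy). reflexivity.
Qed.

Definition has_partials (U : pt -> Prop) F := forall y k, U y -> axis k ->
  exists d, derivable_pt_lim (fun t => F (shift y k t)) 0 d.

Lemma pd_derivable_pt_lim U F y k : has_partials U F -> U y -> axis k ->
  derivable_pt_lim (fun t => F (shift y k t)) 0 (pd k F y).
Proof.
  intros HD Hy Hk; destruct (HD y k Hy Hk) as [d Hd]; rewrite (pd_eq _ _ _ _ Hd); auto.
Qed.

Lemma has_partials_eq_on U F G : is_open U -> eq_on U F G -> has_partials U F ->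
  has_partials U G.
Proof.
  intros HU HE HD y k Hy Hk; destruct (HD y k Hy Hk) as [d Hd]; exists d.
  eapply derivable_pt_lim_eq_on; eauto.
Qed.

Lemma has_partials_plus U F G : has_partials U F -> has_partials U G ->
  has_partials U (fun z => F z + G z).
Proof.
  intros HF HG y k Hy Hk.
  destruct (HF y k Hy Hk) as [d1 H1]; destruct (HG y k Hy Hk) as [d2 H2].
  exists (d1 + d2).
  apply (derivable_pt_lim_plus (fun t => F (shift y k t)) (fun t => G (shift y k t))); auto.
Qed.

Lemma has_partials_scal U F c : has_partials U F -> has_partials U (fun z => c * F z).
Proof.
  intros HF y k Hy Hk. destruct (HF y k Hy Hk) as [d1 H1].
  exists (c * d1). apply (derivable_pt_lim_scal (fun t => F (shift y k t))); auto.
Qed.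

Lemma has_partials_const U c : has_partials U (fun _ => c).
Proof. intros y k _ _; exists 0; apply derivable_pt_lim_const. Qed.

Lemma coord_shift_lim y k j : axis k -> axis j ->
  derivable_pt_lim (fun t => coord (shift y k t) j) 0 (if Nat.eqb j k then 1 else 0).
Proof.
  intros Hk Hj. apply is_derive_Reals.
  apply (is_derive_ext (fun t => coord y j + (if Nat.eqb j k then t else 0))).
  { intro t; rewrite coord_shift; auto. }
  destruct (Nat.eqb j k); auto_derive; auto; ring.
Qed.

Lemma has_partials_coordmul U F j : axis j -> has_partials U F ->
  has_partials U (fun z => coord z j * F z).
Proof.
  intros Hj HF y k Hy Hk. destruct (HF y k Hy Hk) as [d1 H1].
  eexists. apply (derivable_pt_lim_mult (fun t => coord (shift y k t) j) (fun t => F (shift y k t))).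
  - apply coord_shift_lim; auto.
  - exact H1.
Qed.

Lemma sumR_cons {X} (F : X -> R) a l : sumR F (a :: l) = F a + sumR F l.
Proof. reflexivity. Qed.

Lemma sumR_app {X} (F : X -> R) l1 l2 : sumR F (l1 ++ l2) = sumR F l1 + sumR F l2.
Proof. induction l1; simpl; [ring|]. unfold sumR in *; simpl. rewrite IHl1; ring. Qed.

Lemma sumR_map {X Y} (F : Y -> R) (g : X -> Y) l : sumR F (map g l) = sumR (fun x => F (g x)) l.
Proof. induction l; simpl; auto. unfold sumR in *; simpl; rewrite IHl; auto. Qed.

Lemma sumR_ext {X} (F G : X -> R) l : (forall x, In x l -> F x = G x) -> sumR F l = sumR G l.
Proof.
  induction l; intros H; simpl; auto. unfold sumR in *; simpl.
  rewrite (H a (or_introl eq_refl)), IHl; auto. intros; apply H; simpl; auto.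
Qed.

Lemma sumR_plus {X} (F G : X -> R) l : sumR (fun x => F x + G x) l = sumR F l + sumR G l.
Proof. induction l; simpl; [ring|]. unfold sumR in *; simpl. rewrite IHl; ring. Qed.

Lemma sumR_scal {X} (F : X -> R) c l : sumR (fun x => c * F x) l = c * sumR F l.
Proof. induction l; simpl; [ring|]. unfold sumR in *; simpl. rewrite IHl; ring. Qed.

Lemma sumR_flat_map {X Y} (F : Y -> R) (g : X -> list Y) l :
  sumR F (flat_map g l) = sumR (fun x => sumR F (g x)) l.
Proof. induction l; simpl; auto. rewrite sumR_app, IHl; auto. Qed.

Lemma sumR_swap {X Y} (F : X -> Y -> R) l1 l2 :
  sumR (fun a => sumR (fun b => F a b) l2) l1 = sumR (fun b => sumR (fun a => F a b) l1) l2.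
Proof.
  induction l1; simpl.
  - induction l2; simpl; auto. unfold sumR in *; simpl; rewrite <- IHl2; ring.
  - change (sumR (fun b => F a b) l2 + sumR (fun a0 => sumR (fun b => F a0 b) l2) l1 =
      sumR (fun b => F a b + sumR (fun a0 => F a0 b) l1) l2).
    rewrite IHl1, sumR_plus. reflexivity.
Qed.

Lemma has_partials_sumR {X} U (Fs : X -> pt -> R) l : (forall x, In x l -> has_partials U (Fs x)) ->
  has_partials U (fun z => sumR (fun x => Fs x z) l).
Proof.
  induction l; intros H; simpl; [apply has_partials_const|].
  apply has_partials_plus; [apply H; simpl; auto| apply IHl; intros; apply H; simpl; auto].
Qed.

Lemma pd_plus U F G y k : has_partials U F -> has_partials U G -> U y -> axis k ->
  pd k (fun z => F z + G z) y = pd k F y + pd k G y.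
Proof.
  intros HF HG Hy Hk. apply pd_eq.
  apply (derivable_pt_lim_plus (fun t => F (shift y k t)) (fun t => G (shift y k t)));
  eapply pd_derivable_pt_lim; eauto.
Qed.

Lemma pd_scal U F c y k : has_partials U F -> U y -> axis k ->
  pd k (fun z => c * F z) y = c * pd k F y.
Proof.
  intros HF Hy Hk. apply pd_eq.
  apply (derivable_pt_lim_scal (fun t => F (shift y k t))); eapply pd_derivable_pt_lim; eauto.
Qed.

Lemma pd_const c y k : pd k (fun _ => c) y = 0.
Proof. apply pd_eq, derivable_pt_lim_const. Qed.

Lemma pd_coordmul U F j y k : has_partials U F -> U y -> axis k -> axis j ->
  pd k (fun z => coord z j * F z) y = (if Nat.eqb j k then 1 else 0) * F y + coord y j * pd k F y.
Proof.
  intros HF Hy Hk Hj. apply pd_eq.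
  pose proof (derivable_pt_lim_mult (fun t => coord (shift y k t) j) (fun t => F (shift y k t)) 0 _ _
     (coord_shift_lim y k j Hk Hj) (pd_derivable_pt_lim U F y k HF Hy Hk)) as H.
  simpl in H; rewrite shift0 in H; exact H.
Qed.

Lemma pd_sumR {X} U (Fs : X -> pt -> R) l y k : (forall x, In x l -> has_partials U (Fs x)) ->
  U y -> axis k ->
  pd k (fun z => sumR (fun x => Fs x z) l) y = sumR (fun x => pd k (Fs x) y) l.
Proof.
  induction l; intros H Hy Hk; simpl; [apply pd_const|].
  rewrite (pd_plus U); [|apply H; simpl; auto|apply has_partials_sumR; intros; apply H; simpl; auto|auto|auto].
  unfold sumR in IHl |- *; simpl. rewrite IHl; auto. intros; apply H; simpl; auto.
Qed.

Lemma pdbar_sumR {X} U (Fs : X -> pt -> R) l y i : (forall x, In x l -> has_partials U (Fs x)) ->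
  U y -> pdbar i (fun z => sumR (fun x => Fs x z) l) y = sumR (fun x => pdbar i (Fs x) y) l.
Proof.
  intros HD Hy. unfold pdbar.
  rewrite (sumR_ext _ (fun j => sumR (fun k => sumR (fun x => levi i j k * coord y j * pd k (Fs x) y) l) idx3)).
  2:{ intros j _. apply sumR_ext. intros k Hk.
      rewrite (pd_sumR U), sumR_scal; auto. apply axis_idx3; auto. }
  rewrite (sumR_ext _ (fun j => sumR (fun x => sumR (fun k => levi i j k * coord y j * pd k (Fs x) y) idx3) l)).
  2:{ intros; apply sumR_swap. }
  apply sumR_swap.
Qed.

Lemma pdbar_scal U F c y i : has_partials U F -> U y -> pdbar i (fun z => c * F z) y = c * pdbar i F y.
Proof.
  intros HD Hy. unfold pdbar. rewrite <- sumR_scal. apply sumR_ext; intros j _.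
  rewrite <- sumR_scal. apply sumR_ext; intros l Hl.
  rewrite (pd_scal U); auto; [ring|apply axis_idx3; auto].
Qed.

(** * Symmetry of second partial derivatives *)

Lemma pd_is_derive_line U H q k s : has_partials U H -> U (shift q k s) -> axis k ->
  is_derive (fun z => H (shift q k z)) s (pd k H (shift q k s)).
Proof.
  intros HD Hq Hk.
  pose proof (pd_derivable_pt_lim U H (shift q k s) k HD Hq Hk) as H1.
  apply is_derive_Reals in H1.
  apply (is_derive_ext (fun z => H (shift (shift q k s) k (z - s)))).
  { intro z. rewrite shift_shift. do 3 f_equal. ring. }
  replace (pd k H (shift q k s)) with (scal 1 (pd k H (shift q k s))) by (cbn; unfold mult; simpl; ring).
  apply (is_derive_comp (fun t => H (shift (shift q k s) k t))).
  - replace (s - s) with 0 by ring. exact H1.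
  - auto_derive; auto.
Qed.

Definition continuous_on (U : pt -> Prop) F := forall y, U y -> forall e, 0 < e ->
  exists del, 0 < del /\ forall z, U z -> dist3 z y < del -> Rabs (F z - F y) < e.

Definition plane (y : pt) (m n : nat) (u v : R) : pt := shift (shift y m u) n v.

Lemma dist3_plane y m n u v e : axis m -> axis n -> m <> n -> 0 < e ->
  Rabs u < e -> Rabs v < e -> dist3 (plane y m n u v) y < 2 * e.
Proof.
  intros Hm Hn Hmn He Hu Hv.
  assert (Hc : forall i, axis i -> (coord (plane y m n u v) i - coord y i) ^ 2 < e ^ 2).
  { intros i Hi. unfold plane. rewrite !coord_shift by auto.
    rewrite <- pow2_abs. pose proof (Rabs_pos u); pose proof (Rabs_pos v).
    destruct (Nat.eqb i m) eqn:E1, (Nat.eqb i n) eqn:E2.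
    - apply Nat.eqb_eq in E1, E2; lia.
    - replace (coord y i + u + 0 - coord y i) with u by ring; nra.
    - replace (coord y i + 0 + v - coord y i) with v by ring; nra.
    - replace (coord y i + 0 + 0 - coord y i) with 0 by ring; rewrite Rabs_R0; nra. }
  unfold dist3. rewrite <- (sqrt_pow2 (2 * e)) by lra. apply sqrt_lt_1_alt. split.
  - repeat apply Rplus_le_le_0_compat; apply pow2_ge_0.
  - pose proof (Hc 1%nat axis1); pose proof (Hc 2%nat axis2); pose proof (Hc 3%nat axis3); nra.
Qed.

Lemma open_plane U y m n : is_open U -> U y -> axis m -> axis n -> m <> n ->
  exists d, 0 < d /\ forall u v, Rabs u < d -> Rabs v < d -> U (plane y m n u v).
Proof.
  intros HU Hy Hm Hn Hmn. destruct (HU y Hy) as [d [Hd H]]. exists d; split; auto.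
  intros u v Hu Hv. apply H; unfold plane; rewrite !coord_shift by auto;
  destruct (Nat.eqb _ m) eqn:E1, (Nat.eqb _ n) eqn:E2;
  try (apply Nat.eqb_eq in E1, E2; lia);
  match goal with |- Rabs ?x < _ => ring_simplify x end; rewrite ?Rabs_R0; auto.
Qed.

Lemma continuity_2d_pt_plane U H y m n d K : axis m -> axis n -> m <> n -> 0 < d ->
  continuous_on U H -> U y ->
  (forall u v, Rabs u < d -> Rabs v < d -> U (plane y m n u v) /\ K u v = H (plane y m n u v)) ->
  continuity_2d_pt K 0 0.
Proof.
  intros Hm Hn Hmn Hd HC Hy HK eps.
  destruct (HC y Hy eps (cond_pos eps)) as [del [Hdel Hc]].
  assert (Hmin : 0 < Rmin d (del / 2)) by (apply Rmin_pos; lra).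
  pose proof (Rmin_l d (del / 2)); pose proof (Rmin_r d (del / 2)).
  exists (mkposreal _ Hmin); simpl. intros u v Hu Hv. rewrite Rminus_0_r in Hu, Hv.
  assert (Hd0 : Rabs 0 < d) by (rewrite Rabs_R0; lra).
  destruct (HK u v ltac:(lra) ltac:(lra)) as [HUp ->].
  destruct (HK 0 0 Hd0 Hd0) as [_ ->].
  replace (plane y m n 0 0) with y by (unfold plane; rewrite !shift0; auto).
  apply Hc; auto.
  pose proof (dist3_plane y m n u v (Rmin d (del / 2)) Hm Hn Hmn Hmin Hu Hv). lra.
Qed.

Lemma pd_is_derive_plane_snd U G y m n u v : has_partials U G -> U (plane y m n u v) -> axis n ->
  is_derive (fun t => G (plane y m n u t)) v (pd n G (plane y m n u v)).
Proof. intros; apply (pd_is_derive_line U G (shift y m u) n v); auto. Qed.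

Lemma pd_is_derive_plane_fst U G y m n u v : has_partials U G -> U (plane y m n u v) -> axis m ->
  is_derive (fun t => G (plane y m n t v)) u (pd m G (plane y m n u v)).
Proof.
  intros HD HU Hm. unfold plane in *. rewrite shift_comm in HU |- *.
  apply (is_derive_ext (fun t => G (shift (shift y n v) m t))); [intro t; rewrite shift_comm; auto|].
  apply (pd_is_derive_line U G (shift y n v) m u); auto.
Qed.

Lemma pd_comm_of_continuous U G y m n : is_open U -> has_partials U G ->
  has_partials U (pd n G) -> has_partials U (pd m G) ->
  continuous_on U (pd m (pd n G)) -> continuous_on U (pd n (pd m G)) -> U y ->
  axis m -> axis n -> pd m (pd n G) y = pd n (pd m G) y.
Proof.
  intros HU HG HGn HGm Cmn Cnm Hy Hm Hn.
  destruct (Nat.eq_dec m n) as [<-|Hmn]; [reflexivity|].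
  destruct (open_plane U y m n HU Hy Hm Hn Hmn) as [d [Hd HP]].
  set (P := plane y m n). set (phi := fun u v => G (P u v)).
  assert (Hhalf : forall a b, Rabs (a - b) < d / 2 -> Rabs b < d / 2 -> Rabs a < d).
  { intros a b Hab Hb. pose proof (Rabs_triang (a - b) b).
    replace (a - b + b) with a in H by ring. lra. }
  assert (F3 : forall u v, Rabs u < d / 2 -> Rabs v < d / 2 ->
     is_derive (fun z => Derive (fun t => phi z t) v) u (pd m (pd n G) (P u v))).
  { intros u v Hu Hv.
    apply (is_derive_ext_loc (fun z => pd n G (P z v))).
    - exists (mkposreal (d / 2) ltac:(lra)). intros z Hz. simpl in Hz.
      symmetry; apply is_derive_unique, (pd_is_derive_plane_snd U); auto.
      apply HP; [apply (Hhalf _ u)|]; auto; lra.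
    - apply (pd_is_derive_plane_fst U); auto. apply HP; lra. }
  assert (F4 : forall u v, Rabs u < d / 2 -> Rabs v < d / 2 ->
     is_derive (fun z => Derive (fun t => phi t z) u) v (pd n (pd m G) (P u v))).
  { intros u v Hu Hv.
    apply (is_derive_ext_loc (fun z => pd m G (P u z))).
    - exists (mkposreal (d / 2) ltac:(lra)). intros z Hz. simpl in Hz.
      symmetry; apply is_derive_unique, (pd_is_derive_plane_fst U); auto.
      apply HP; [|apply (Hhalf _ v)]; auto; lra.
    - apply (pd_is_derive_plane_snd U); auto. apply HP; lra. }
  assert (R0 : Rabs 0 < d / 2) by (rewrite Rabs_R0; lra).
  replace y with (P 0 0) by (unfold P, plane; rewrite !shift0; auto).
  rewrite <- (is_derive_unique _ _ _ (F3 0 0 R0 R0)), <- (is_derive_unique _ _ _ (F4 0 0 R0 R0)).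
  apply Schwarz.
  - exists (mkposreal (d / 2) ltac:(lra)); simpl. intros u v Hu Hv. rewrite Rminus_0_r in Hu, Hv.
    repeat split; eexists;
      [apply (pd_is_derive_plane_fst U)|apply (pd_is_derive_plane_snd U)|apply F3|apply F4];
      auto; apply HP; lra.
  - apply (continuity_2d_pt_plane U (pd m (pd n G)) y m n (d / 2)); auto; [lra|].
    intros u v Hu Hv. split; [apply HP; lra|]. apply is_derive_unique, F3; auto.
  - apply (continuity_2d_pt_plane U (pd n (pd m G)) y m n (d / 2)); auto; [lra|].
    intros u v Hu Hv. split; [apply HP; lra|]. apply is_derive_unique, F4; auto.
Qed.

Definition partials_commute (U : pt -> Prop) F :=
  forall y m n, U y -> axis m -> axis n -> pd m (pd n F) y = pd n (pd m F) y.

Definition regular (U : pt -> Prop) F := forall l, List.Forall axis l ->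
  has_partials U (iter_pd l F) /\ partials_commute U (iter_pd l F).

Lemma iter_pd_app l1 l2 F : iter_pd (l1 ++ l2) F = iter_pd l1 (iter_pd l2 F).
Proof. apply fold_right_app. Qed.

Lemma regular_of_iter_pd_eq U G (Rp : list nat -> pt -> R) : is_open U ->
  (forall l, List.Forall axis l -> eq_on U (iter_pd l G) (Rp l)) ->
  (forall l, List.Forall axis l -> has_partials U (Rp l)) ->
  (forall l y m n, List.Forall axis l -> U y -> axis m -> axis n -> Rp (m :: n :: l) y = Rp (n :: m :: l) y) ->
  regular U G.
Proof.
  intros HU HE HD HS l Hl. split.
  - apply (has_partials_eq_on U (Rp l)); auto. intros z Hz; symmetry; apply (HE l Hl z Hz).
  - intros y m n Hy Hm Hn. change (iter_pd (m :: n :: l) G y = iter_pd (n :: m :: l) G y).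
    rewrite !HE by (auto; repeat constructor; auto). apply HS; auto.
Qed.

Lemma regular_eq_on U F G : is_open U -> eq_on U F G -> regular U F -> regular U G.
Proof.
  intros HU HE HN. apply (regular_of_iter_pd_eq U G (fun l => iter_pd l F)); auto.
  - intros l _ z Hz. symmetry; apply (eq_on_iter_pd U F G l HU HE); auto.
  - intros l Hl; apply HN; auto.
  - intros l y m n Hl Hy Hm Hn. apply HN; auto.
Qed.

Lemma regular_pd U F k : regular U F -> axis k -> regular U (pd k F).
Proof.
  intros HN Hk l Hl. change (pd k F) with (iter_pd [k] F). rewrite <- iter_pd_app.
  apply HN. apply Forall_app; split; auto.
Qed.

Lemma regular_has_partials U F : regular U F -> has_partials U F.
Proof. intros HN; apply (HN []); constructor. Qed.

Lemma regular_plus U F G : is_open U -> regular U F -> regular U G -> regular U (fun z => F z + G z).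
Proof.
  intros HU HF HG. apply (regular_of_iter_pd_eq U _ (fun l z => iter_pd l F z + iter_pd l G z)); auto.
  - induction l; intros Hl z Hz; simpl; auto. inversion Hl; subst.
    rewrite (pd_local U _ _ a z HU (IHl H2) Hz), (pd_plus U); auto; [apply HF|apply HG]; auto.
  - intros l Hl; apply has_partials_plus; [apply HF|apply HG]; auto.
  - intros l y m n Hl Hy Hm Hn; simpl. f_equal; [apply HF|apply HG]; auto.
Qed.

Lemma regular_scal U F c : is_open U -> regular U F -> regular U (fun z => c * F z).
Proof.
  intros HU HF. apply (regular_of_iter_pd_eq U _ (fun l z => c * iter_pd l F z)); auto.
  - induction l; intros Hl z Hz; simpl; auto. inversion Hl; subst.
    rewrite (pd_local U _ _ a z HU (IHl H2) Hz), (pd_scal U); auto; apply HF; auto.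
  - intros l Hl; apply has_partials_scal; apply HF; auto.
  - intros l y m n Hl Hy Hm Hn; simpl. f_equal; apply HF; auto.
Qed.

Lemma regular_const U c : is_open U -> regular U (fun _ => c).
Proof.
  intros HU. apply (regular_of_iter_pd_eq U _ (fun l z => match l with [] => c | _ => 0 end)); auto.
  - induction l; intros Hl z Hz; simpl; auto. inversion Hl; subst.
    rewrite (pd_local U _ _ a z HU (IHl H2) Hz). destruct l; apply pd_const.
  - intros l Hl; destruct l; apply has_partials_const.
Qed.

(* The words obtained from [l] by deleting one occurrence of [j]: by the Leibniz rule,
   [iter_pd l (y_j F) = y_j iter_pd l F + sum of iter_pd l' F over these l']. *)
Fixpoint delete_each (j : nat) (l : list nat) : list (list nat) :=
  match l with
  | [] => []
  | m :: l' => (if Nat.eqb m j then [l'] else []) ++ map (cons m) (delete_each j l')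
  end.

Lemma delete_each_axis j l : List.Forall axis l -> forall l', In l' (delete_each j l) -> List.Forall axis l'.
Proof.
  induction l; simpl; intros Hl l' H; [contradiction|]. inversion Hl; subst.
  apply in_app_or in H; destruct H as [H|H].
  - destruct (Nat.eqb a j); simpl in H; [destruct H as [H|[]]; subst; auto | contradiction].
  - apply in_map_iff in H; destruct H as [x [<- Hx]]. constructor; auto.
Qed.

Lemma regular_coordmul U F j : is_open U -> axis j -> regular U F ->
  regular U (fun z => coord z j * F z).
Proof.
  intros HU Hj HF.
  apply (regular_of_iter_pd_eq U _ (fun l z => coord z j * iter_pd l F z +
           sumR (fun l' => iter_pd l' F z) (delete_each j l))); auto.
  - induction l; intros Hl z Hz; simpl; [unfold sumR; simpl; ring|].
    inversion Hl; subst. rewrite (pd_local U _ _ a z HU (IHl H2) Hz).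
    assert (HD : forall l', In l' (delete_each j l) -> has_partials U (iter_pd l' F))
      by (intros; apply HF; eapply delete_each_axis; eauto).
    rewrite (pd_plus U), (pd_coordmul U), (pd_sumR U (fun l' => iter_pd l' F)); auto;
      try (apply HF; auto).
    2:{ apply has_partials_coordmul; auto; apply HF; auto. }
    2:{ apply (has_partials_sumR U (fun l' => iter_pd l' F)); auto. }
    rewrite sumR_app, sumR_map, Nat.eqb_sym. destruct (Nat.eqb a j); unfold sumR; simpl; ring.
  - intros l Hl. apply has_partials_plus; [apply has_partials_coordmul; auto; apply HF; auto|].
    apply (has_partials_sumR U (fun l' => iter_pd l' F)).
    intros; apply HF; eapply delete_each_axis; eauto.
  - intros l y m n Hl Hy Hm Hn. simpl.
    repeat rewrite sumR_app, sumR_map. repeat rewrite sumR_app, sumR_map. simpl.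
    assert (E1 : iter_pd (m :: n :: l) F y = iter_pd (n :: m :: l) F y) by (apply HF; auto).
    simpl in E1. rewrite E1.
    assert (E2 : sumR (fun x => pd m (pd n (iter_pd x F)) y) (delete_each j l) =
                 sumR (fun x => pd n (pd m (iter_pd x F)) y) (delete_each j l)).
    { apply sumR_ext; intros x Hx; apply HF; auto; eapply delete_each_axis; eauto. }
    rewrite E2. destruct (Nat.eqb m j), (Nat.eqb n j); unfold sumR; simpl; ring.
Qed.

Lemma regular_sumR {X} U (Fs : X -> pt -> R) l : is_open U ->
  (forall x, In x l -> regular U (Fs x)) -> regular U (fun z => sumR (fun x => Fs x z) l).
Proof.
  intros HU; induction l; intros H; simpl; [apply regular_const; auto|].
  apply regular_plus; auto; [apply H; simpl; auto|]. apply IHl; intros; apply H; simpl; auto.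
Qed.

Lemma regular_pdbar U F i : is_open U -> regular U F -> regular U (pdbar i F).
Proof.
  intros HU HF. unfold pdbar.
  apply (regular_sumR U (fun j z => sumR (fun k => levi i j k * coord z j * pd k F z) idx3)); auto.
  intros j Hj. apply (regular_sumR U (fun k z => levi i j k * coord z j * pd k F z)); auto.
  intros k Hk. apply axis_idx3 in Hj, Hk.
  apply (regular_eq_on U (fun z => levi i j k * (coord z j * pd k F z))); auto.
  - intros z _; ring.
  - apply regular_scal, regular_coordmul, regular_pd; auto.
Qed.

Lemma regular_of_continuous_partials U f : is_open U ->
  (forall l, has_partials U (iter_pd l f) /\ continuous_on U (iter_pd l f)) -> regular U f.
Proof.
  intros HU H l _. split; [apply H|].
  intros y m n Hy Hm Hn. apply (pd_comm_of_continuous U); try apply H; auto.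
  - exact (proj1 (H (n :: l))).
  - exact (proj1 (H (m :: l))).
  - exact (proj2 (H (m :: n :: l))).
  - exact (proj2 (H (n :: m :: l))).
Qed.

Lemma sq_sub_le a e d : 0 < d <= 1 -> Rabs (e - a) < d -> e ^ 2 - a ^ 2 <= d * (1 + 2 * Rabs a).
Proof.
  intros Hd H. set (h := e - a). replace e with (a + h) by (unfold h; ring).
  assert (Rabs h < d) by auto.
  assert (h ^ 2 <= d) by (rewrite <- pow2_abs; pose proof (Rabs_pos h); nra).
  assert (a * h <= Rabs a * Rabs h) by (rewrite <- Rabs_mult; apply Rle_abs).
  pose proof (Rabs_pos a). nra.
Qed.

Lemma is_open_Omega A B : is_open (in_Omega A B).
Proof.
  intros y Hy. unfold in_Omega in *.
  set (g := A / B - normsq y).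
  set (S := Rabs (coord y 1) + Rabs (coord y 2) + Rabs (coord y 3)).
  pose proof (Rabs_pos (coord y 1)) as P1; pose proof (Rabs_pos (coord y 2)) as P2;
    pose proof (Rabs_pos (coord y 3)) as P3.
  assert (Hg : 0 < g) by (unfold g; lra).
  assert (Hq : 0 < g / (6 * (1 + 2 * S))) by (apply Rdiv_lt_0_compat; unfold S; lra).
  set (d := Rmin 1 (g / (6 * (1 + 2 * S)))).
  assert (Hd : 0 < d) by (apply Rmin_pos; lra).
  pose proof (Rmin_l 1 (g / (6 * (1 + 2 * S)))) as Hd1.
  assert (Hdg : d * (6 * (1 + 2 * S)) <= g).
  { pose proof (Rmin_r 1 (g / (6 * (1 + 2 * S)))) as Hd2. fold d in Hd1, Hd2.
    apply Rmult_le_compat_r with (r := 6 * (1 + 2 * S)) in Hd2; [|unfold S; lra].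
    unfold Rdiv in Hd2. rewrite Rmult_assoc, Rinv_l in Hd2 by (unfold S; lra). lra. }
  exists d; split; auto. intros z Z1 Z2 Z3. fold d in Hd1.
  pose proof (sq_sub_le _ _ d ltac:(lra) Z1). pose proof (sq_sub_le _ _ d ltac:(lra) Z2).
  pose proof (sq_sub_le _ _ d ltac:(lra) Z3).
  assert (0 <= d * S) by (apply Rmult_le_pos; unfold S; lra).
  assert (d * (1 + 2 * Rabs (coord y 1)) + d * (1 + 2 * Rabs (coord y 2))
          + d * (1 + 2 * Rabs (coord y 3)) = 3 * d + 2 * (d * S)) by (unfold S; ring).
  assert (d * (6 * (1 + 2 * S)) = 6 * d + 12 * (d * S)) by ring.
  unfold g, normsq in *. lra.
Qed.

Lemma smooth_regular A B f : smooth_on A B f -> regular (in_Omega A B) f.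
Proof.
  intros H. apply regular_of_continuous_partials; [apply is_open_Omega|].
  intros l; destruct (H l) as [H1 H2]; split; [intros y k Hy Hk; apply H1; auto | exact H2].
Qed.

Lemma sig_pos A B y : 0 < B -> in_Omega A B y -> 0 < sig_ A B y.
Proof.
  intros HB Hy. unfold in_Omega, sig_ in *.
  apply Rmult_lt_compat_l with (r := B) in Hy; auto. unfold Rdiv in Hy.
  rewrite <- Rmult_assoc, (Rmult_comm B A), Rmult_assoc, Rinv_r in Hy by lra. lra.
Qed.

Lemma coord_bound A B y j : 0 < A -> 0 < B -> in_Omega A B y -> axis j ->
  Rabs (coord y j) <= 1 + A / B.
Proof.
  intros HA HB Hy Hj. unfold in_Omega, normsq in Hy.
  assert (coord y j ^ 2 < A / B).
  { pose proof (pow2_ge_0 (coord y 1)); pose proof (pow2_ge_0 (coord y 2));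
    pose proof (pow2_ge_0 (coord y 3)).
    destruct (axis_cases j Hj) as [?|[?|?]]; subst; lra. }
  rewrite <- pow2_abs in H. pose proof (Rabs_pos (coord y j)). nra.
Qed.

Inductive oper := OpD (m : nat) | OpB (i : nat).

Definition oper_fun (o : oper) (F : pt -> R) : pt -> R :=
  match o with OpD m => pd m F | OpB i => pdbar i F end.

Fixpoint word_fun (w : list oper) (F : pt -> R) : pt -> R :=
  match w with [] => F | o :: w' => oper_fun o (word_fun w' F) end.

Definition oper_axis (o : oper) := match o with OpD m => axis m | OpB i => axis i end.
Definition word_ok (w : list oper) := List.Forall oper_axis w.

Lemma word_fun_app w1 w2 F : word_fun (w1 ++ w2) F = word_fun w1 (word_fun w2 F).
Proof. induction w1; simpl; auto. rewrite IHw1; auto. Qed.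

Lemma word_ok_app w1 w2 : word_ok w1 -> word_ok w2 -> word_ok (w1 ++ w2).
Proof. intros; apply Forall_app; auto. Qed.

Lemma word_ok_map_OpD L : List.Forall axis L -> word_ok (map OpD L).
Proof. induction 1; simpl; constructor; auto. Qed.

Lemma word_ok_map_OpB L : List.Forall axis L -> word_ok (map OpB L).
Proof. induction 1; simpl; constructor; auto. Qed.

Lemma eq_on_oper_fun U o F G : is_open U -> eq_on U F G -> eq_on U (oper_fun o F) (oper_fun o G).
Proof. destruct o; simpl; intros; [apply eq_on_pd|apply eq_on_pdbar]; auto. Qed.

Lemma eq_on_word_fun U w F G : is_open U -> eq_on U F G -> eq_on U (word_fun w F) (word_fun w G).
Proof. induction w; simpl; auto. intros; apply eq_on_oper_fun; auto. Qed.

Lemma regular_oper_fun U o F : is_open U -> oper_axis o -> regular U F -> regular U (oper_fun o F).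
Proof. destruct o; simpl; intros; [apply regular_pd|apply regular_pdbar]; auto. Qed.

Lemma regular_word_fun U w F : is_open U -> word_ok w -> regular U F -> regular U (word_fun w F).
Proof.
  induction w; simpl; auto. intros HU Hw HF; inversion Hw; subst.
  apply regular_oper_fun; auto.
Qed.

Lemma oper_fun_sumR {X} U o (Fs : X -> pt -> R) l y : oper_axis o ->
  (forall x, In x l -> has_partials U (Fs x)) -> U y ->
  oper_fun o (fun z => sumR (fun x => Fs x z) l) y = sumR (fun x => oper_fun o (Fs x) y) l.
Proof. destruct o; simpl; intros; [apply (pd_sumR U)|apply (pdbar_sumR U)]; auto. Qed.

Lemma oper_fun_scal U o F c y : oper_axis o -> has_partials U F -> U y ->
  oper_fun o (fun z => c * F z) y = c * oper_fun o F y.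
Proof. destruct o; simpl; intros; [apply (pd_scal U)|apply (pdbar_scal U)]; auto. Qed.

Lemma word_pd_comm U f w a b y : is_open U -> regular U f -> word_ok w -> U y -> axis a -> axis b ->
  word_fun (OpD a :: OpD b :: w) f y = word_fun (OpD b :: OpD a :: w) f y.
Proof.
  intros HU Hf Hw Hy Ha Hb.
  apply (regular_word_fun U w f HU Hw Hf [] (List.Forall_nil _)); auto.
Qed.

(** * Terms: a coefficient [1], [y_j] or [sigma] times a word applied to [f] *)

Inductive coef := One | Y (j : nat) | Sig.

Definition coef_fun (A B : R) (k : coef) (y : pt) : R :=
  match k with One => 1 | Y j => coord y j | Sig => sig_ A B y end.

Definition coef_ok (k : coef) := match k with Y j => axis j | _ => True end.

Definition coef_pd (B : R) (k : coef) (m : nat) (y : pt) : R :=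
  match k with One => 0 | Y j => if Nat.eqb j m then 1 else 0 | Sig => -2 * B * coord y m end.

Lemma sig_shift_lim A B y m : axis m ->
  derivable_pt_lim (fun t => sig_ A B (shift y m t)) 0 (-2 * B * coord y m).
Proof.
  intros Hm. apply is_derive_Reals. destruct y as [[a b] c].
  destruct (axis_cases m Hm) as [?|[?|?]]; subst; unfold sig_, normsq; simpl;
  auto_derive; auto; ring.
Qed.

Lemma coef_shift_lim A B k y m : coef_ok k -> axis m ->
  derivable_pt_lim (fun t => coef_fun A B k (shift y m t)) 0 (coef_pd B k m y).
Proof.
  intros Hk Hm. destruct k; simpl in *.
  - apply derivable_pt_lim_const.
  - apply coord_shift_lim; auto.
  - apply sig_shift_lim; auto.
Qed.

Lemma pd_coefmul U A B c k H y m : has_partials U H -> U y -> axis m -> coef_ok k ->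
  pd m (fun z => c * coef_fun A B k z * H z) y =
  c * (coef_pd B k m y * H y + coef_fun A B k y * pd m H y).
Proof.
  intros HD Hy Hm Hk. apply pd_eq.
  apply (derivable_pt_lim_ext (fun t => c * (coef_fun A B k (shift y m t) * H (shift y m t)))).
  { intro; ring. }
  apply derivable_pt_lim_scal.
  pose proof (derivable_pt_lim_mult _ (fun t => H (shift y m t)) 0 _ _
     (coef_shift_lim A B k y m Hk Hm) (pd_derivable_pt_lim U H y m HD Hy Hm)) as E.
  simpl in E; rewrite shift0 in E; exact E.
Qed.

Lemma pdbar_coefmul U A B c k H y i : has_partials U H -> U y -> coef_ok k ->
  pdbar i (fun z => c * coef_fun A B k z * H z) y =
  c * (sumR (fun j => sumR (fun l => levi i j l * coord y j * coef_pd B k l y) idx3) idx3 * H y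
       + coef_fun A B k y * pdbar i H y).
Proof.
  intros HD Hy Hk. unfold pdbar.
  rewrite (sumR_ext _ (fun j => sumR (fun l => levi i j l * coord y j *
     (c * (coef_pd B k l y * H y + coef_fun A B k y * pd l H y))) idx3)).
  2:{ intros j _; apply sumR_ext; intros l Hl. rewrite (pd_coefmul U); auto. apply axis_idx3; auto. }
  unfold sumR, idx3; simpl. ring.
Qed.

Lemma regular_sigmul U A B H : is_open U -> regular U H -> regular U (fun z => sig_ A B z * H z).
Proof.
  intros HU HH.
  apply (regular_eq_on U (fun z => A * H z + ((-B) * (coord z 1 * (coord z 1 * H z)) +
     ((-B) * (coord z 2 * (coord z 2 * H z)) + (-B) * (coord z 3 * (coord z 3 * H z)))))); auto.
  { intros z _; unfold sig_, normsq; ring. }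
  repeat apply regular_plus; auto; apply regular_scal; auto; repeat apply regular_coordmul; auto.
Qed.

Lemma regular_coefmul U A B c k H : is_open U -> coef_ok k -> regular U H ->
  regular U (fun z => c * coef_fun A B k z * H z).
Proof.
  intros HU Hk HH.
  apply (regular_eq_on U (fun z => c * (coef_fun A B k z * H z))); [auto|intros z _; ring|].
  apply regular_scal; auto. destruct k; simpl in *.
  - apply (regular_eq_on U H); auto. intros z _; ring.
  - apply regular_coordmul; auto.
  - apply regular_sigmul; auto.
Qed.

Definition term := (R * coef * list oper)%type.

Definition term_fun (A B : R) (f : pt -> R) (t : term) (y : pt) : R :=
  let '(c, k, w) := t in c * coef_fun A B k y * word_fun w f y.

Definition terms_fun A B f (TL : list term) (y : pt) : R := sumR (fun t => term_fun A B f t y) TL.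

Definition term_ok (t : term) := let '(c, k, w) := t in coef_ok k /\ word_ok w.

Lemma terms_fun_app A B f l1 l2 y :
  terms_fun A B f (l1 ++ l2) y = terms_fun A B f l1 y + terms_fun A B f l2 y.
Proof. apply sumR_app. Qed.

Lemma regular_term_fun U A B f t : is_open U -> term_ok t -> regular U f -> regular U (term_fun A B f t).
Proof.
  intros HU Ht Hf. destruct t as [[c k] w]; destruct Ht.
  apply regular_coefmul, regular_word_fun; auto.
Qed.


(* Leibniz rule; note [pdbar_i sigma = 0]. *)
Definition oper_terms (B : R) (o : oper) (t : term) : list term :=
  let '(c, k, w) := t in
  match o, k with
  | OpD m, One => [(c, One, OpD m :: w)]
  | OpD m, Y j => [(c, Y j, OpD m :: w); (if Nat.eqb j m then c else 0, One, w)]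
  | OpD m, Sig => [(c, Sig, OpD m :: w); (-2 * B * c, Y m, w)]
  | OpB i, One => [(c, One, OpB i :: w)]
  | OpB i, Y j => (c, Y j, OpB i :: w) :: map (fun l => (c * levi i l j, Y l, w)) idx3
  | OpB i, Sig => [(c, Sig, OpB i :: w)]
  end.

Lemma oper_terms_ok B o t : oper_axis o -> term_ok t -> List.Forall term_ok (oper_terms B o t).
Proof.
  intros Ho Ht. destruct t as [[c k] w]; destruct Ht as [Hk Hw].
  destruct o, k; unfold idx3; simpl in *;
  repeat (apply List.Forall_cons); try apply List.Forall_nil; simpl;
  try (split; [auto|]); try (apply List.Forall_cons; [exact Ho|]); auto.
Qed.

Lemma oper_term_fun U A B f o t y : is_open U -> regular U f -> oper_axis o -> term_ok t -> U y ->
  oper_fun o (term_fun A B f t) y = terms_fun A B f (oper_terms B o t) y.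
Proof.
  intros HU Hf Ho Ht Hy. destruct t as [[c k] w]; destruct Ht as [Hk Hw].
  assert (HD : has_partials U (word_fun w f))
    by (apply regular_has_partials, regular_word_fun; auto).
  unfold term_fun, terms_fun. destruct o; simpl in Ho |- *.
  - rewrite (pd_coefmul U); auto.
    destruct k; simpl; unfold sumR; simpl; [ring| |ring]. destruct (Nat.eqb j m); ring.
  - rewrite (pdbar_coefmul U); auto.
    destruct (axis_cases i Ho) as [?|[?|?]]; subst;
    destruct k; simpl in *; unfold sumR, idx3; simpl; try ring;
    destruct (axis_cases j Hk) as [?|[?|?]]; subst; simpl; ring.
Qed.

Fixpoint word_terms (B : R) (w : list oper) (TL : list term) : list term :=
  match w with [] => TL | o :: w' => flat_map (oper_terms B o) (word_terms B w' TL) end.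

Lemma Forall_flat_map_oper_terms B o (P Q : term -> Prop) TL :
  (forall t, P t -> List.Forall Q (oper_terms B o t)) -> List.Forall P TL ->
  List.Forall Q (flat_map (oper_terms B o) TL).
Proof. intros H HP. induction HP; simpl; auto. apply Forall_app; auto. Qed.

Lemma word_terms_ok B w TL : word_ok w -> List.Forall term_ok TL -> List.Forall term_ok (word_terms B w TL).
Proof.
  induction w; simpl; auto. intros Hw HT; inversion Hw; subst.
  apply (Forall_flat_map_oper_terms B a term_ok); auto. intros; apply oper_terms_ok; auto.
Qed.

Lemma word_terms_app B w X Z : word_terms B w (X ++ Z) = word_terms B w X ++ word_terms B w Z.
Proof. induction w; simpl; auto. rewrite IHw, flat_map_app; auto. Qed.

Lemma oper_terms_fun U A B f o TL : is_open U -> regular U f -> oper_axis o -> List.Forall term_ok TL ->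
  eq_on U (oper_fun o (terms_fun A B f TL)) (terms_fun A B f (flat_map (oper_terms B o) TL)).
Proof.
  intros HU Hf Ho HT y Hy. rewrite Forall_forall in HT. unfold terms_fun at 1.
  rewrite (oper_fun_sumR U o (fun t => term_fun A B f t)); auto.
  2:{ intros t Ht. apply regular_has_partials, regular_term_fun; auto. }
  unfold terms_fun. rewrite sumR_flat_map. apply sumR_ext. intros t Ht.
  apply (oper_term_fun U); auto.
Qed.

Lemma word_terms_fun U A B f w TL : is_open U -> regular U f -> word_ok w -> List.Forall term_ok TL ->
  eq_on U (word_fun w (terms_fun A B f TL)) (terms_fun A B f (word_terms B w TL)).
Proof.
  intros HU Hf. induction w; simpl; intros Hw HT y Hy; auto. inversion Hw; subst.
  rewrite (eq_on_oper_fun U a _ _ HU (IHw H2 HT) y Hy).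
  apply (oper_terms_fun U); auto. apply word_terms_ok; auto.
Qed.

(** * Commutation relations *)

Definition pdbar_terms (i : nat) (w : list oper) : list term :=
  flat_map (fun j => map (fun l => (levi i j l, Y j, OpD l :: w)) idx3) idx3.

Lemma pdbar_terms_ok i w : word_ok w -> List.Forall term_ok (pdbar_terms i w).
Proof.
  intros Hw. apply Forall_forall; intros t Ht.
  apply in_flat_map in Ht as [j [Hj Ht]]; apply in_map_iff in Ht as [l [<- Hl]].
  split; [|constructor]; auto; apply axis_idx3; auto.
Qed.

Lemma word_fun_OpB A B f i w y : word_fun (OpB i :: w) f y = terms_fun A B f (pdbar_terms i w) y.
Proof. unfold terms_fun, pdbar_terms, term_fun, idx3; simpl. unfold pdbar, sumR, idx3; simpl. ring. Qed.

Lemma pd_pdbar_word U f w j b y : is_open U -> regular U f -> word_ok w -> U y -> axis b ->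
  pd b (word_fun (OpB j :: w) f) y = sumR (fun c => sumR (fun d => levi j c d *
     ((if Nat.eqb c b then 1 else 0) * word_fun (OpD d :: w) f y
      + coord y c * word_fun (OpD b :: OpD d :: w) f y)) idx3) idx3.
Proof.
  intros HU Hf Hw Hy Hb.
  rewrite (pd_local U _ (terms_fun 0 0 f (pdbar_terms j w)) b y HU); auto.
  2:{ intros z Hz; apply word_fun_OpB. }
  change (pd b (terms_fun 0 0 f (pdbar_terms j w)) y)
    with (oper_fun (OpD b) (terms_fun 0 0 f (pdbar_terms j w)) y).
  rewrite (oper_terms_fun U 0 0 f (OpD b) _ HU Hf Hb (pdbar_terms_ok j w Hw) y Hy).
  unfold pdbar_terms, terms_fun, term_fun, idx3; simpl. unfold sumR; simpl.
  destruct (axis_cases b Hb) as [?|[?|?]]; subst; simpl; ring.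
Qed.

Lemma pdbar_pd_commute U f w i k y : is_open U -> regular U f -> word_ok w -> U y ->
  axis i -> axis k ->
  word_fun (OpB i :: OpD k :: w) f y =
  word_fun (OpD k :: OpB i :: w) f y - sumR (fun l => levi i k l * word_fun (OpD l :: w) f y) idx3.
Proof.
  intros HU Hf Hw Hy Hi Hk.
  pose proof (fun a b Ha Hb => word_pd_comm U f w a b y HU Hf Hw Hy Ha Hb) as S.
  change (word_fun (OpD k :: OpB i :: w) f y) with (pd k (word_fun (OpB i :: w) f) y).
  rewrite (pd_pdbar_word U f w i k y); auto.
  change (word_fun (OpB i :: OpD k :: w) f y) with (pdbar i (pd k (word_fun w f)) y).
  unfold pdbar, sumR, idx3; simpl.
  pose proof (S 2%nat 1%nat axis2 axis1) as S21; pose proof (S 3%nat 1%nat axis3 axis1) as S31;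
  pose proof (S 3%nat 2%nat axis3 axis2) as S32. simpl in S21, S31, S32.
  destruct (axis_cases i Hi) as [?|[?|?]]; destruct (axis_cases k Hk) as [?|[?|?]]; subst; simpl;
  rewrite ?S21, ?S31, ?S32; ring.
Qed.

Lemma levi_sum_pdbar f w m k y : axis m -> axis k ->
  sumR (fun n => levi n m k * word_fun (OpB n :: w) f y) idx3 =
  coord y m * word_fun (OpD k :: w) f y - coord y k * word_fun (OpD m :: w) f y.
Proof.
  intros Hm Hk. simpl. unfold pdbar, sumR, idx3; simpl.
  destruct (axis_cases m Hm) as [?|[?|?]]; destruct (axis_cases k Hk) as [?|[?|?]]; subst; simpl; ring.
Qed.

Lemma pdbar_pdbar_commute U f w i j y : is_open U -> regular U f -> word_ok w -> U y ->
  axis i -> axis j ->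
  word_fun (OpB i :: OpB j :: w) f y =
  word_fun (OpB j :: OpB i :: w) f y - sumR (fun n => levi i j n * word_fun (OpB n :: w) f y) idx3.
Proof.
  intros HU Hf Hw Hy Hi Hj.
  pose proof (fun a b Ha Hb => word_pd_comm U f w a b y HU Hf Hw Hy Ha Hb) as S.
  pose proof (S 2%nat 1%nat axis2 axis1) as S21; pose proof (S 3%nat 1%nat axis3 axis1) as S31;
  pose proof (S 3%nat 2%nat axis3 axis2) as S32. simpl in S21, S31, S32.
  assert (E : forall i j, word_fun (OpB i :: OpB j :: w) f y =
     sumR (fun a => sumR (fun b => levi i a b * coord y a * sumR (fun c => sumR (fun d => levi j c d *
     ((if Nat.eqb c b then 1 else 0) * word_fun (OpD d :: w) f y
      + coord y c * word_fun (OpD b :: OpD d :: w) f y)) idx3) idx3) idx3) idx3).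
  { intros i' j'.
    change (word_fun (OpB i' :: OpB j' :: w) f y) with
      (sumR (fun a => sumR (fun b => levi i' a b * coord y a * pd b (word_fun (OpB j' :: w) f) y) idx3) idx3).
    apply sumR_ext; intros a _; apply sumR_ext; intros b Hb. f_equal.
    apply (pd_pdbar_word U); auto. apply axis_idx3; auto. }
  rewrite (E i j), (E j i).
  unfold pdbar, sumR, idx3; simpl. unfold pdbar, sumR, idx3; simpl.
  destruct (axis_cases i Hi) as [?|[?|?]]; destruct (axis_cases j Hj) as [?|[?|?]]; subst; simpl;
  rewrite ?S21, ?S31, ?S32; ring.
Qed.

(** * Commuting derivatives past [sigma^(-q) pd_k sigma^(q+1)] *)

Lemma sig_weighted_pd A B H q k y : 0 < B -> in_Omega A B y -> has_partials (in_Omega A B) H ->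
  axis k ->
  Rpower (sig_ A B y) (- q) * pd k (fun w => Rpower (sig_ A B w) (q + 1) * H w) y =
  (q + 1) * (-2 * B * coord y k) * H y + sig_ A B y * pd k H y.
Proof.
  intros HB Hy HD Hk. pose proof (sig_pos A B y HB Hy) as Hs.
  assert (E1 : derivable_pt_lim (comp (fun x => Rpower x (q + 1)) (fun t => sig_ A B (shift y k t))) 0
               ((q + 1) * Rpower (sig_ A B y) (q + 1 - 1) * (-2 * B * coord y k))).
  { apply derivable_pt_lim_comp; [apply sig_shift_lim; auto|].
    rewrite shift0. apply derivable_pt_lim_power; auto. }
  pose proof (derivable_pt_lim_mult _ (fun t => H (shift y k t)) 0 _ _ E1
                (pd_derivable_pt_lim _ H y k HD Hy Hk)) as E2.
  rewrite (pd_eq _ _ _ _ E2). unfold comp; rewrite shift0.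
  replace (q + 1 - 1) with q by ring.
  assert (P1 : Rpower (sig_ A B y) (- q) * Rpower (sig_ A B y) q = 1)
    by (rewrite <- Rpower_plus, Rplus_opp_l; apply Rpower_O; auto).
  assert (P2 : Rpower (sig_ A B y) (- q) * Rpower (sig_ A B y) (q + 1) = sig_ A B y)
    by (rewrite <- Rpower_plus; replace (- q + (q + 1)) with 1 by ring; apply Rpower_1; auto).
  transitivity ((Rpower (sig_ A B y) (- q) * Rpower (sig_ A B y) q) * ((q + 1) * (-2 * B * coord y k) * H y)
    + (Rpower (sig_ A B y) (- q) * Rpower (sig_ A B y) (q + 1)) * pd k H y); [ring|].
  rewrite P1, P2; ring.
Qed.

Definition weighted_pd_terms (iota B : R) (k c : nat) (w : list oper) : list term :=
  [((iota + INR c + 1) * (-2 * B), Y k, w); (1, Sig, OpD k :: w)].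

Lemma weighted_pd_terms_ok iota B k c w : axis k -> word_ok w ->
  List.Forall term_ok (weighted_pd_terms iota B k c w).
Proof.
  intros Hk Hw. constructor; [split; auto|constructor; [split; [exact I|constructor; auto]|constructor]].
Qed.

Lemma weighted_pd_terms_fun iota A B k c w f y : 0 < B -> axis k -> word_ok w ->
  regular (in_Omega A B) f -> in_Omega A B y ->
  Rpower (sig_ A B y) (- (iota + INR c)) *
    pd k (fun z => Rpower (sig_ A B z) (iota + INR c + 1) * word_fun w f z) y
  = terms_fun A B f (weighted_pd_terms iota B k c w) y.
Proof.
  intros HB Hk Hw Hf Hy.
  rewrite (sig_weighted_pd A B (word_fun w f) (iota + INR c) k y HB Hy); auto.
  - unfold terms_fun, weighted_pd_terms, sumR, term_fun, coef_fun; simpl. ring.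
  - apply regular_has_partials, regular_word_fun; auto. apply is_open_Omega.
Qed.

(* [pd_m y_k] and [pd_m sigma = -2B y_m], with [y_m pd_k - y_k pd_m] rewritten by [levi_sum_pdbar]. *)
Definition pd_error_terms (iota B : R) (k c m : nat) (w : list oper) : list term :=
  ((-2 * B) * (iota + INR c + 1) * (if Nat.eqb m k then 1 else 0), One, w) ::
  map (fun n => (-2 * B * levi n m k, One, OpB n :: w)) idx3.

(* [pdbar_i y_k] and the commutator [pdbar_pd_commute]; [pdbar_i sigma = 0]. *)
Definition pdbar_error_terms (iota B : R) (k i : nat) (w : list oper) : list term :=
  map (fun j => ((iota + 1) * (-2 * B) * levi i j k, Y j, w)) idx3 ++
  map (fun l => (- levi i k l, Sig, OpD l :: w)) idx3.

Lemma pd_weighted_pd_terms U iota A B f k c m w y : is_open U -> regular U f -> axis k -> axis m ->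
  word_ok w -> U y ->
  terms_fun A B f (flat_map (oper_terms B (OpD m)) (weighted_pd_terms iota B k c w)) y =
  terms_fun A B f (weighted_pd_terms iota B k (S c) (OpD m :: w)) y
  + terms_fun A B f (pd_error_terms iota B k c m w) y.
Proof.
  intros HU Hf Hk Hm Hw Hy.
  assert (L1 : sumR (fun n => term_fun A B f (-2 * B * levi n m k, One, OpB n :: w) y) idx3 =
     -2 * B * (coord y m * word_fun (OpD k :: w) f y - coord y k * word_fun (OpD m :: w) f y)).
  { rewrite <- (levi_sum_pdbar f w m k y Hm Hk), <- sumR_scal. apply sumR_ext; intros n _.
    unfold term_fun, coef_fun. ring. }
  pose proof (word_pd_comm U f w m k y HU Hf Hw Hy Hm Hk) as S1.
  unfold terms_fun, pd_error_terms. rewrite sumR_cons, sumR_map, L1.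
  unfold weighted_pd_terms. rewrite S_INR. simpl flat_map. unfold sumR, term_fun, coef_fun.
  simpl fold_right. cbn [word_fun oper_fun] in *. rewrite S1, (Nat.eqb_sym k m).
  destruct (Nat.eqb m k); ring.
Qed.

Lemma pdbar_weighted_pd_terms U iota A B f k i w y : is_open U -> regular U f -> axis k -> axis i ->
  word_ok w -> U y ->
  terms_fun A B f (flat_map (oper_terms B (OpB i)) (weighted_pd_terms iota B k 0 w)) y =
  terms_fun A B f (weighted_pd_terms iota B k 0 (OpB i :: w)) y
  + terms_fun A B f (pdbar_error_terms iota B k i w) y.
Proof.
  intros HU Hf Hk Hi Hw Hy.
  pose proof (pdbar_pd_commute U f w i k y HU Hf Hw Hy Hi Hk) as L2.
  unfold terms_fun, pdbar_error_terms, weighted_pd_terms. simpl flat_map.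
  unfold sumR, idx3, term_fun, coef_fun. simpl.
  cbn [word_fun oper_fun] in *. rewrite L2. unfold sumR, idx3. simpl.
  destruct (axis_cases i Hi) as [?|[?|?]]; destruct (axis_cases k Hk) as [?|[?|?]]; subst; simpl; ring.
Qed.

Fixpoint count_pd (w : list oper) : nat :=
  match w with [] => 0 | OpD _ :: w' => S (count_pd w') | OpB _ :: w' => count_pd w' end.
Fixpoint count_pdbar (w : list oper) : nat :=
  match w with [] => 0 | OpB _ :: w' => S (count_pdbar w') | OpD _ :: w' => count_pdbar w' end.

Lemma count_pd_app w1 w2 : count_pd (w1 ++ w2) = (count_pd w1 + count_pd w2)%nat.
Proof. induction w1 as [|[]]; simpl; auto. Qed.
Lemma count_pdbar_app w1 w2 : count_pdbar (w1 ++ w2) = (count_pdbar w1 + count_pdbar w2)%nat.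
Proof. induction w1 as [|[]]; simpl; auto. Qed.
Lemma count_pd_map_OpD L : count_pd (map OpD L) = length L.
Proof. induction L; simpl; auto. Qed.
Lemma count_pdbar_map_OpD L : count_pdbar (map OpD L) = 0%nat.
Proof. induction L; simpl; auto. Qed.
Lemma count_pd_map_OpB L : count_pd (map OpB L) = 0%nat.
Proof. induction L; simpl; auto. Qed.
Lemma count_pdbar_map_OpB L : count_pdbar (map OpB L) = length L.
Proof. induction L; simpl; auto. Qed.

Definition pd_error_shape (n : nat) (W : list oper) (t : term) : Prop :=
  let '(_, k, w) := t in
  k = One /\ (count_pd w + 1 = n + count_pd W)%nat /\ (count_pdbar w <= count_pdbar W + 1)%nat.

Lemma telescope_pd iota A B k : axis k -> forall L W c, List.Forall axis L -> word_ok W ->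
  exists TL, List.Forall (pd_error_shape (length L) W) TL /\ List.Forall term_ok TL /\
  forall U f, is_open U -> regular U f ->
    eq_on U (word_fun (map OpD L) (terms_fun A B f (weighted_pd_terms iota B k c W)))
      (fun z => terms_fun A B f (weighted_pd_terms iota B k (c + length L) (map OpD L ++ W)) z
                + terms_fun A B f TL z).
Proof.
  intros Hk. induction L as [|m L IH]; intros W c HL HW.
  - exists []. split; [constructor|split; [constructor|]]. intros U f HU Hf z Hz. simpl.
    rewrite Nat.add_0_r. unfold terms_fun; simpl. ring.
  - inversion HL; subst. destruct (IH W c H2 HW) as [TL [Hsh [Hok HE]]].
    set (W' := map OpD L ++ W).
    assert (HW' : word_ok W') by (apply word_ok_app; auto; apply word_ok_map_OpD; auto).
    assert (HcW' : count_pd W' = (length L + count_pd W)%nat /\ count_pdbar W' = count_pdbar W)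
      by (unfold W'; rewrite count_pd_app, count_pd_map_OpD, count_pdbar_app, count_pdbar_map_OpD; auto).
    exists (pd_error_terms iota B k (c + length L) m W' ++ flat_map (oper_terms B (OpD m)) TL).
    split; [|split].
    + apply Forall_app; split.
      * constructor; [simpl; repeat split; lia|].
        apply Forall_map, Forall_forall. intros n _. simpl. repeat split; lia.
      * apply (Forall_flat_map_oper_terms B (OpD m) (fun t => pd_error_shape (length L) W t /\ term_ok t)).
        -- intros [[c0 kd] w] [[Hkd [Ha Hb]] _]. subst kd. simpl. repeat constructor; simpl; lia.
        -- apply Forall_forall; intros t Ht; rewrite Forall_forall in Hsh, Hok; auto.
    + apply Forall_app; split.
      * constructor; [simpl; split; auto|].
        apply Forall_map, Forall_forall. intros n Hn. simpl. split; auto.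
        constructor; auto. apply axis_idx3; auto.
      * apply (Forall_flat_map_oper_terms B (OpD m) term_ok); auto. intros; apply oper_terms_ok; auto.
    + intros U f HU Hf z Hz.
      change (word_fun (map OpD (m :: L)) ?X) with (pd m (word_fun (map OpD L) X)).
      rewrite (pd_local U _ (terms_fun A B f (weighted_pd_terms iota B k (c + length L) W' ++ TL)) m z HU);
        auto.
      2:{ intros z' Hz'. rewrite terms_fun_app. apply (HE U f HU Hf z' Hz'). }
      change (pd m ?X z) with (oper_fun (OpD m) X z).
      rewrite (oper_terms_fun U A B f (OpD m)); auto.
      2:{ apply Forall_app; split; auto. apply weighted_pd_terms_ok; auto. }
      rewrite flat_map_app, terms_fun_app, (pd_weighted_pd_terms U), !terms_fun_app; auto.
      simpl length. rewrite Nat.add_succ_r.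
      change (map OpD (m :: L) ++ W) with (OpD m :: W'). ring.
Qed.

Definition pdbar_error_shape (n : nat) (W : list oper) (t : term) : Prop :=
  let '(_, k, w) := t in (count_pdbar w + 1 <= n + count_pdbar W)%nat /\
  match k with Y _ => count_pd w = count_pd W | Sig => count_pd w = S (count_pd W) | One => False end.

Lemma telescope_pdbar iota A B k : axis k -> forall M W, List.Forall axis M -> word_ok W ->
  exists TL, List.Forall (pdbar_error_shape (length M) W) TL /\ List.Forall term_ok TL /\
  forall U f, is_open U -> regular U f ->
    eq_on U (word_fun (map OpB M) (terms_fun A B f (weighted_pd_terms iota B k 0 W)))
      (fun z => terms_fun A B f (weighted_pd_terms iota B k 0 (map OpB M ++ W)) z
                + terms_fun A B f TL z).
Proof.
  intros Hk. induction M as [|i M IH]; intros W HM HW.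
  - exists []. split; [constructor|split; [constructor|]]. intros U f HU Hf z Hz. simpl.
    unfold terms_fun; simpl. ring.
  - inversion HM; subst. destruct (IH W H2 HW) as [TL [Hsh [Hok HE]]].
    set (W' := map OpB M ++ W).
    assert (HW' : word_ok W') by (apply word_ok_app; auto; apply word_ok_map_OpB; auto).
    assert (HcW' : count_pd W' = count_pd W /\ count_pdbar W' = (length M + count_pdbar W)%nat)
      by (unfold W'; rewrite count_pd_app, count_pd_map_OpB, count_pdbar_app, count_pdbar_map_OpB; auto).
    exists (pdbar_error_terms iota B k i W' ++ flat_map (oper_terms B (OpB i)) TL).
    split; [|split].
    + apply Forall_app; split.
      * apply Forall_app; split; apply Forall_map, Forall_forall; intros n _; simpl; split; lia.
      * apply (Forall_flat_map_oper_terms B (OpB i) (fun t => pdbar_error_shape (length M) W t /\ term_ok t)).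
        -- intros [[c0 kd] w] [[Ha Hb] _].
           destruct kd; unfold idx3; simpl in Hb |- *; try contradiction;
           repeat (apply List.Forall_cons; [simpl; split; [lia|auto]|]); apply List.Forall_nil.
        -- apply Forall_forall; intros t Ht; rewrite Forall_forall in Hsh, Hok; auto.
    + apply Forall_app; split.
      * apply Forall_app; split; apply Forall_map, Forall_forall; intros n Hn;
        apply axis_idx3 in Hn; simpl; split; auto; constructor; auto.
      * apply (Forall_flat_map_oper_terms B (OpB i) term_ok); auto. intros; apply oper_terms_ok; auto.
    + intros U f HU Hf z Hz.
      change (word_fun (map OpB (i :: M)) ?X) with (pdbar i (word_fun (map OpB M) X)).
      rewrite (eq_on_pdbar U _ (terms_fun A B f (weighted_pd_terms iota B k 0 W' ++ TL)) i HU); auto.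
      2:{ intros z' Hz'. rewrite terms_fun_app. apply (HE U f HU Hf z' Hz'). }
      change (pdbar i ?X z) with (oper_fun (OpB i) X z).
      rewrite (oper_terms_fun U A B f (OpB i)); auto.
      2:{ apply Forall_app; split; auto. apply weighted_pd_terms_ok; auto. }
      rewrite flat_map_app, terms_fun_app, (pdbar_weighted_pd_terms U), !terms_fun_app; auto.
      change (map OpB (i :: M) ++ W) with (OpB i :: W'). ring.
Qed.

Definition propagated_shape (nb n : nat) (t : term) : Prop :=
  let '(_, k, w) := t in (count_pdbar w + 1 <= nb)%nat /\
  match k with Sig => count_pd w = S n | Y _ => count_pd w = n | One => (count_pd w + 1 = n)%nat end.

Lemma propagated_shape_word_terms B nb L : forall n TL, List.Forall (propagated_shape nb n) TL ->
  List.Forall (propagated_shape nb (length L + n)) (word_terms B (map OpD L) TL).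
Proof.
  induction L as [|m L IH]; intros n TL H; simpl; auto.
  apply (Forall_flat_map_oper_terms B (OpD m) (propagated_shape nb (length L + n))); auto.
  intros [[c kd] w] [H1 H2]. destruct kd; simpl in *; repeat constructor; simpl; lia.
Qed.

(** * Normal ordering of words *)

Definition mindex_axes (a : mindex) : list nat :=
  let '(a1, a2, a3) := a in repeat 1%nat a1 ++ repeat 2%nat a2 ++ repeat 3%nat a3.

Definition pd_word (a : mindex) : list oper := map OpD (mindex_axes a).
Definition pdbar_word (b : mindex) : list oper := map OpB (mindex_axes b).
Definition normal_word (a b : mindex) : list oper := pd_word a ++ pdbar_word b.

Lemma iter_oper_fun o n F : Nat.iter n (oper_fun o) F = word_fun (repeat o n) F.
Proof. induction n; simpl; auto. rewrite IHn; auto. Qed.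

Lemma mixed_normal_word a b f : mixed a b f = word_fun (normal_word a b) f.
Proof.
  destruct a as [[a1 a2] a3], b as [[b1 b2] b3].
  unfold mixed, pd_multi, pdbar_multi, pow_op, normal_word, pd_word, pdbar_word, mindex_axes.
  rewrite !map_app, !word_fun_app, !map_repeat, <- !iter_oper_fun. reflexivity.
Qed.

Lemma mindex_axes_length a : length (mindex_axes a) = msize a.
Proof. destruct a as [[a1 a2] a3]; simpl. rewrite !length_app, !repeat_length. lia. Qed.

Lemma repeat_axis n c : axis c -> List.Forall axis (repeat c n).
Proof. intros H; apply Forall_forall; intros x Hx; apply repeat_spec in Hx; subst; auto. Qed.

Lemma mindex_axes_axis a : List.Forall axis (mindex_axes a).
Proof. destruct a as [[a1 a2] a3]; simpl. repeat (apply Forall_app; split); apply repeat_axis; auto. Qed.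

Lemma pd_word_ok a : word_ok (pd_word a).
Proof. apply word_ok_map_OpD, mindex_axes_axis. Qed.

Lemma pdbar_word_ok b : word_ok (pdbar_word b).
Proof. apply word_ok_map_OpB, mindex_axes_axis. Qed.

Lemma normal_word_ok a b : word_ok (normal_word a b).
Proof. apply word_ok_app; [apply pd_word_ok|apply pdbar_word_ok]. Qed.



Definition mindex_succ (m : nat) (a : mindex) : mindex :=
  let '(a1, a2, a3) := a in
  match m with 1%nat => (S a1, a2, a3) | 2%nat => (a1, S a2, a3) | _ => (a1, a2, S a3) end.

Lemma msize_mindex_succ m a : msize (mindex_succ m a) = S (msize a).
Proof. destruct a as [[a1 a2] a3]; destruct m as [|[|[|]]]; simpl; lia. Qed.

Definition lin_comb (f : pt -> R) (RL : list (R * list oper)) (z : pt) : R :=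
  sumR (fun x => fst x * word_fun (snd x) f z) RL.

Definition spanned (Q : list oper -> Prop) (w : list oper) :=
  exists RL : list (R * list oper), List.Forall (fun x => Q (snd x) /\ word_ok (snd x)) RL /\
  forall U f, is_open U -> regular U f -> eq_on U (word_fun w f) (lin_comb f RL).

Lemma spanned_self (Q : list oper -> Prop) w : Q w -> word_ok w -> spanned Q w.
Proof.
  intros HQ Hw. exists [(1, w)]. split; [constructor; auto|].
  intros U f HU Hf z Hz. unfold lin_comb, sumR; simpl. ring.
Qed.

Lemma spanned_mono (Q Q' : list oper -> Prop) w : (forall v, Q v -> Q' v) -> spanned Q w -> spanned Q' w.
Proof.
  intros H [RL [H1 H2]]. exists RL; split; auto.
  eapply Forall_impl; [|exact H1]. intros x [? ?]; split; auto.
Qed.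

Lemma spanned_eq_on Q w w' : (forall U f, is_open U -> regular U f -> eq_on U (word_fun w f) (word_fun w' f)) ->
  spanned Q w' -> spanned Q w.
Proof.
  intros H [RL [H1 H2]]. exists RL; split; auto. intros U f HU Hf z Hz.
  rewrite (H U f HU Hf z Hz). apply (H2 U f HU Hf z Hz).
Qed.

Lemma lin_comb_spanned Q RL : (forall x, In x RL -> spanned Q (snd x)) ->
  exists RL', List.Forall (fun x => Q (snd x) /\ word_ok (snd x)) RL' /\
  forall U f, is_open U -> regular U f -> eq_on U (lin_comb f RL) (lin_comb f RL').
Proof.
  induction RL as [|x RL IH]; intros H.
  - exists []; split; [constructor|]. intros U f _ _ z _; reflexivity.
  - destruct IH as [RL0 [H0 E0]]; [intros; apply H; simpl; auto|].
    destruct (H x (or_introl eq_refl)) as [RLx [Hx Ex]].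
    exists (map (fun p => (fst x * fst p, snd p)) RLx ++ RL0). split.
    + apply Forall_app; split; auto. apply Forall_map. eapply Forall_impl; [|exact Hx]. auto.
    + intros U f HU Hf z Hz.
      change (lin_comb f (x :: RL) z) with (fst x * word_fun (snd x) f z + lin_comb f RL z).
      rewrite (E0 U f HU Hf z Hz), (Ex U f HU Hf z Hz). unfold lin_comb.
      rewrite sumR_app, sumR_map, <- sumR_scal. f_equal. apply sumR_ext; intros; simpl; ring.
Qed.

Lemma spanned_lin_comb Q w RL : (forall x, In x RL -> spanned Q (snd x)) ->
  (forall U f, is_open U -> regular U f -> eq_on U (word_fun w f) (lin_comb f RL)) -> spanned Q w.
Proof.
  intros H1 H2. destruct (lin_comb_spanned Q RL H1) as [RL' [H3 H4]].
  exists RL'; split; auto. intros U f HU Hf z Hz.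
  rewrite (H2 U f HU Hf z Hz); apply (H4 U f HU Hf z Hz).
Qed.

Lemma spanned_trans (Q1 Q : list oper -> Prop) w : spanned Q1 w ->
  (forall v, Q1 v -> word_ok v -> spanned Q v) -> spanned Q w.
Proof.
  intros [RL [H1 H2]] H. apply (spanned_lin_comb Q w RL); auto.
  intros x Hx. rewrite Forall_forall in H1. destruct (H1 x Hx). apply H; auto.
Qed.

Lemma oper_fun_lin_comb U o f RL y : is_open U -> regular U f -> oper_axis o ->
  List.Forall (fun x => word_ok (snd x)) RL -> U y ->
  oper_fun o (lin_comb f RL) y = lin_comb f (map (fun x => (fst x, o :: snd x)) RL) y.
Proof.
  intros HU Hf Ho H Hy. rewrite Forall_forall in H.
  assert (HD : forall x, In x RL -> has_partials U (word_fun (snd x) f))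
    by (intros; apply regular_has_partials, regular_word_fun; auto).
  unfold lin_comb at 1.
  rewrite (oper_fun_sumR U o (fun x z => fst x * word_fun (snd x) f z)); auto.
  2:{ intros x Hx. apply has_partials_scal; auto. }
  unfold lin_comb. rewrite sumR_map. apply sumR_ext; intros x Hx. apply (oper_fun_scal U); auto.
Qed.

Lemma spanned_cons Q o w : oper_axis o -> spanned Q w ->
  spanned (fun v => exists v', v = o :: v' /\ Q v') (o :: w).
Proof.
  intros Ho [RL [H1 H2]]. exists (map (fun x => (fst x, o :: snd x)) RL). split.
  - apply Forall_map. eapply Forall_impl; [|exact H1]. intros x [Hq Hw]; simpl; split; eauto.
    constructor; auto.
  - intros U f HU Hf z Hz. simpl.
    rewrite (eq_on_oper_fun U o _ _ HU (H2 U f HU Hf) z Hz).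
    apply (oper_fun_lin_comb U); auto. eapply Forall_impl; [|exact H1]. intros x [_ Hw]; auto.
Qed.

Lemma spanned_cons_trans Q Q' o w : oper_axis o -> spanned Q w ->
  (forall v, Q v -> word_ok v -> spanned Q' (o :: v)) -> spanned Q' (o :: w).
Proof.
  intros Ho HS H. apply (spanned_trans _ _ _ (spanned_cons Q o w Ho HS)).
  intros v [v' [-> Hv']] Hw. inversion Hw; subst. apply H; auto.
Qed.

Lemma spanned_prefix Q p w : word_ok p -> spanned Q w ->
  spanned (fun v => exists v', v = p ++ v' /\ Q v') (p ++ w).
Proof.
  induction p as [|o p IH]; intros Hp HS; simpl.
  - eapply spanned_mono; [|exact HS]. intros v Hv; exists v; auto.
  - inversion Hp; subst. eapply spanned_mono; [|apply spanned_cons; [auto|apply IH; auto]].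
    intros v [v1 [-> [v2 [-> Hq]]]]. exists v2; auto.
Qed.

Lemma mindex_axes_succ m a : axis m ->
  Permutation (m :: mindex_axes a) (mindex_axes (mindex_succ m a)).
Proof.
  intros Hm. destruct a as [[a1 a2] a3].
  destruct (axis_cases m Hm) as [?|[?|?]]; subst; simpl.
  - reflexivity.
  - apply Permutation_middle.
  - rewrite !app_assoc. apply Permutation_middle.
Qed.

Lemma sort_axes L : List.Forall axis L -> exists a, Permutation L (mindex_axes a).
Proof.
  induction 1 as [|m L Hm _ [a Ha]].
  - exists (0, 0, 0)%nat; reflexivity.
  - exists (mindex_succ m a). rewrite Ha. apply mindex_axes_succ; auto.
Qed.

Lemma word_fun_pd_perm U f w L L' : is_open U -> regular U f -> word_ok w ->
  List.Forall axis L -> Permutation L L' ->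
  eq_on U (word_fun (map OpD L ++ w) f) (word_fun (map OpD L' ++ w) f).
Proof.
  intros HU Hf Hw HL HP. induction HP as [|m L L' HP IH|m n L|L L' L'' HP1 IH1 HP2 IH2];
    intros z Hz; simpl.
  - reflexivity.
  - inversion HL; subst. apply (pd_local U); auto.
  - inversion HL as [|? ? Hn HL']; inversion HL'; subst.
    apply (word_pd_comm U f (map OpD L ++ w)); auto. apply word_ok_app; auto. apply word_ok_map_OpD; auto.
  - rewrite (IH1 HL z Hz). apply IH2; auto. apply (Permutation_Forall HP1 HL).
Qed.

Lemma pdbar_past_pd_word i L w : axis i -> List.Forall axis L -> word_ok w ->
  exists RL : list (R * list nat),
    List.Forall (fun x => length (snd x) = length L /\ List.Forall axis (snd x)) RL /\
    forall U f, is_open U -> regular U f -> eq_on U (word_fun (OpB i :: map OpD L ++ w) f)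
      (fun z => word_fun (map OpD L ++ OpB i :: w) f z
                + sumR (fun x => fst x * word_fun (map OpD (snd x) ++ w) f z) RL).
Proof.
  intros Hi. induction L as [|m L IH]; intros HL Hw.
  - exists []; split; [constructor|]. intros U f HU Hf z Hz. unfold sumR; simpl; ring.
  - inversion HL; subst. destruct (IH H2 Hw) as [RL [HRL HE]].
    exists (map (fun x => (fst x, m :: snd x)) RL ++ map (fun l => (- levi i m l, l :: L)) idx3).
    split.
    + apply Forall_app; split.
      * apply Forall_map. eapply Forall_impl; [|exact HRL]. intros x [Hl Hx]; simpl; split; auto.
      * apply Forall_map, Forall_forall; intros l Hl; simpl; split; auto.
        constructor; auto. apply axis_idx3; auto.
    + intros U f HU Hf z Hz. rewrite Forall_forall in HRL.
      assert (HX : word_ok (map OpD L ++ w)) by (apply word_ok_app; auto; apply word_ok_map_OpD; auto).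
      assert (HDx : forall x, In x RL -> has_partials U (word_fun (map OpD (snd x) ++ w) f)).
      { intros x Hx. apply regular_has_partials, regular_word_fun; auto. apply word_ok_app; auto.
        apply word_ok_map_OpD. apply HRL; auto. }
      change (word_fun (OpB i :: map OpD (m :: L) ++ w) f z)
        with (word_fun (OpB i :: OpD m :: (map OpD L ++ w)) f z).
      rewrite (pdbar_pd_commute U f _ i m z HU Hf HX Hz Hi H1).
      change (word_fun (OpD m :: OpB i :: map OpD L ++ w) f z)
        with (pd m (word_fun (OpB i :: map OpD L ++ w) f) z).
      rewrite (pd_local U _ _ m z HU (HE U f HU Hf) Hz).
      rewrite (pd_plus U), (pd_sumR U (fun x z => fst x * word_fun (map OpD (snd x) ++ w) f z));
        auto.
      2:{ intros x Hx; apply has_partials_scal; auto. }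
      2:{ apply regular_has_partials, regular_word_fun; auto.
          apply word_ok_app; [apply word_ok_map_OpD|constructor]; auto. }
      2:{ apply (has_partials_sumR U (fun x z => fst x * word_fun (map OpD (snd x) ++ w) f z)).
          intros x Hx; apply has_partials_scal; auto. }
      rewrite sumR_app, !sumR_map.
      rewrite (sumR_ext (fun x => pd m (fun z0 => fst x * word_fun (map OpD (snd x) ++ w) f z0) z)
                        (fun x => fst x * word_fun (map OpD (m :: snd x) ++ w) f z)).
      2:{ intros x Hx. rewrite (pd_scal U); auto. }
      simpl. ring.
Qed.

Definition pdbar_normal (n : nat) (v : list oper) : Prop :=
  exists c, v = pdbar_word c /\ (msize c <= n)%nat.

Definition pdbar_insertable (b : mindex) :=
  forall i, axis i -> spanned (pdbar_normal (S (msize b))) (OpB i :: pdbar_word b).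

Lemma spanned_pdbar_swap Q i j w : axis i -> axis j -> word_ok w ->
  spanned Q (OpB j :: OpB i :: w) -> (forall n, axis n -> spanned Q (OpB n :: w)) ->
  spanned Q (OpB i :: OpB j :: w).
Proof.
  intros Hi Hj Hw H1 H2.
  apply (spanned_lin_comb _ _ ((1, OpB j :: OpB i :: w) :: map (fun n => (- levi i j n, OpB n :: w)) idx3)).
  - intros x [<-|Hx]; auto. apply in_map_iff in Hx as [n [<- Hn]]. apply H2, axis_idx3; auto.
  - intros U f HU Hf z Hz. rewrite (pdbar_pdbar_commute U f _ i j z HU Hf Hw Hz Hi Hj).
    unfold lin_comb; simpl; unfold sumR, idx3; simpl; ring.
Qed.

Lemma pdbar_normal_self c n : (msize c <= n)%nat -> spanned (pdbar_normal n) (pdbar_word c).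
Proof. intros Hc. apply spanned_self; [exists c; auto|apply pdbar_word_ok]. Qed.

Lemma pdbar_word_succ1 c : OpB 1 :: pdbar_word c = pdbar_word (mindex_succ 1 c).
Proof. destruct c as [[c1 c2] c3]; reflexivity. Qed.

Lemma insert_pdbar_past1 b1 b2 b3 :
  (forall b', (msize b' < msize (S b1, b2, b3))%nat -> pdbar_insertable b') ->
  pdbar_insertable (S b1, b2, b3).
Proof.
  intros IH i Hi. set (b' := (b1, b2, b3)).
  assert (Hlt : (msize b' < msize (S b1, b2, b3))%nat) by (simpl; lia).
  change (pdbar_word (S b1, b2, b3)) with (OpB 1 :: pdbar_word b').
  apply spanned_pdbar_swap; auto; [apply pdbar_word_ok| |].
  - apply (spanned_cons_trans _ _ (OpB 1) _ axis1 (IH b' Hlt i Hi)).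
    intros v [c [-> Hc]] _. rewrite pdbar_word_succ1. apply pdbar_normal_self.
    rewrite msize_mindex_succ. simpl in *; lia.
  - intros n Hn. eapply spanned_mono; [|apply (IH b' Hlt n Hn)].
    intros v [c [-> Hc]]; exists c; split; auto; simpl in *; lia.
Qed.

Lemma insert_pdbar_step b : (forall b', (msize b' < msize b)%nat -> pdbar_insertable b') ->
  pdbar_insertable b.
Proof.
  intros IH. destruct b as [[[|b1] b2] b3]; [|apply insert_pdbar_past1; auto].
  intros i Hi. destruct (axis_cases i Hi) as [?|[?|?]]; subst.
  - rewrite pdbar_word_succ1. apply pdbar_normal_self. rewrite msize_mindex_succ; lia.
  - apply (pdbar_normal_self (0, S b2, b3)%nat); simpl; lia.
  - destruct b2 as [|b2]; [apply (pdbar_normal_self (0, 0, S b3)%nat); simpl; lia|].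
    set (b' := (0, b2, b3)%nat).
    assert (Hlt : (msize b' < msize (0, S b2, b3))%nat) by (simpl; lia).
    change (pdbar_word (0, S b2, b3)%nat) with (OpB 2 :: pdbar_word b').
    apply spanned_pdbar_swap; auto; [apply pdbar_word_ok| |].
    + apply (spanned_cons_trans _ _ (OpB 2) _ axis2 (IH b' Hlt 3%nat axis3)).
      intros v [[[[|c1] c2] c3] [-> Hc]] _.
      * apply (pdbar_normal_self (0, S c2, c3)%nat); simpl in *; lia.
      * eapply spanned_mono; [|apply insert_pdbar_past1; auto].
        -- intros v [d [-> Hd]]; exists d; split; auto; simpl in *; lia.
        -- intros b'' Hb''; apply IH; simpl in *; lia.
    + intros n Hn. eapply spanned_mono; [|apply (IH b' Hlt n Hn)].
      intros v [c [-> Hc]]; exists c; split; auto; simpl in *; lia.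
Qed.

Lemma insert_pdbar b : pdbar_insertable b.
Proof.
  assert (H : forall n b, (msize b <= n)%nat -> pdbar_insertable b).
  { induction n; intros b' Hb; apply insert_pdbar_step; intros b'' Hb''; [lia|apply IHn; lia]. }
  exact (H _ b (le_n _)).
Qed.

Definition normal_form (na nb : nat) (v : list oper) : Prop :=
  exists a b, v = normal_word a b /\ msize a = na /\ (msize b <= nb)%nat.

Lemma normal_form_self a b na nb : msize a = na -> (msize b <= nb)%nat ->
  spanned (normal_form na nb) (normal_word a b).
Proof. intros Ha Hb. apply spanned_self; [exists a, b; auto|apply normal_word_ok]. Qed.

Lemma normal_ordering w : word_ok w -> spanned (normal_form (count_pd w) (count_pdbar w)) w.
Proof.
  induction w as [|o w IH]; intros Hw.
  - apply (normal_form_self (0, 0, 0)%nat (0, 0, 0)%nat); auto.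
  - inversion Hw as [|? ? Ho Hw']; subst.
    apply (spanned_cons_trans _ _ _ _ Ho (IH Hw')). intros v [a [b [-> [Ha Hb]]]] _.
    destruct o as [m|i]; simpl in Ho |- *; rewrite <- Ha.
    + apply (spanned_eq_on _ _ (normal_word (mindex_succ m a) b)).
      * intros U f HU Hf. apply (word_fun_pd_perm U f _ (m :: mindex_axes a)); auto.
        -- apply pdbar_word_ok.
        -- constructor; auto; apply mindex_axes_axis.
        -- apply mindex_axes_succ; auto.
      * apply normal_form_self; [apply msize_mindex_succ|auto].
    + destruct (pdbar_past_pd_word i (mindex_axes a) (pdbar_word b) Ho (mindex_axes_axis a)
                  (pdbar_word_ok b)) as [RL [HRL HE]].
      rewrite Forall_forall in HRL.
      apply (spanned_lin_comb _ _ ((1, pd_word a ++ OpB i :: pdbar_word b) ::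
               map (fun x => (fst x, map OpD (snd x) ++ pdbar_word b)) RL)).
      * intros x [<-|Hx]; cbn [snd].
        -- apply (spanned_trans _ _ _ (spanned_prefix _ _ _ (pd_word_ok a) (insert_pdbar b i Ho))).
           intros v [v' [-> [c [-> Hc]]]] _. apply normal_form_self; auto. lia.
        -- apply in_map_iff in Hx as [x' [<- Hx']]. simpl.
           destruct (HRL x' Hx') as [Hl Hid]. destruct (sort_axes _ Hid) as [a' Ha'].
           apply (spanned_eq_on _ _ (normal_word a' b)).
           ++ intros U f HU Hf. apply word_fun_pd_perm; auto. apply pdbar_word_ok.
           ++ apply normal_form_self; [|lia].
              rewrite <- mindex_axes_length, <- (Permutation_length Ha'), Hl.
              apply mindex_axes_length.
      * intros U f HU Hf z Hz. unfold normal_word, pd_word.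
        rewrite (HE U f HU Hf z Hz). unfold lin_comb.
        rewrite sumR_cons, sumR_map. cbn [fst snd]. ring.
Qed.

(** * Estimates *)

Lemma Rabs_sumR {X} (F : X -> R) l : Rabs (sumR F l) <= sumR (fun x => Rabs (F x)) l.
Proof.
  induction l; simpl; [rewrite Rabs_R0; lra|].
  unfold sumR in *; simpl. eapply Rle_trans; [apply Rabs_triang|]. lra.
Qed.

Lemma sumR_le {X} (F G : X -> R) l : (forall x, In x l -> F x <= G x) -> sumR F l <= sumR G l.
Proof.
  induction l; intros H; [simpl; lra|]. rewrite !sumR_cons.
  apply Rplus_le_compat; [apply H; simpl; auto|apply IHl; intros; apply H; simpl; auto].
Qed.

Lemma sumR_nonneg {X} (F : X -> R) l : (forall x, In x l -> 0 <= F x) -> 0 <= sumR F l.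
Proof.
  induction l; intros H; [simpl; lra|]. rewrite sumR_cons.
  apply Rplus_le_le_0_compat; [apply H; simpl; auto|apply IHl; intros; apply H; simpl; auto].
Qed.

Lemma sumR_ge_elem {X} (F : X -> R) l x : In x l -> (forall x, In x l -> 0 <= F x) -> F x <= sumR F l.
Proof.
  induction l; intros Hx H; [contradiction|]. rewrite sumR_cons.
  destruct Hx as [->|Hx].
  - pose proof (sumR_nonneg F l (fun x Hx => H x (or_intror Hx))). lra.
  - pose proof (H a (or_introl eq_refl)).
    pose proof (IHl Hx (fun x Hx => H x (or_intror Hx))). lra.
Qed.

Lemma sumR_seq_mono (F : nat -> R) n m : (n <= m)%nat -> (forall x, 0 <= F x) ->
  sumR F (seq 0 n) <= sumR F (seq 0 m).
Proof.
  intros H H0. replace m with (n + (m - n))%nat by lia. rewrite seq_app, sumR_app.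
  pose proof (sumR_nonneg F (seq (0 + n) (m - n)) (fun x _ => H0 x)). lra.
Qed.

Lemma mindices_msize a : In a (mindices (msize a)).
Proof.
  destruct a as [[a1 a2] a3]. unfold mindices. cbn [msize].
  apply in_flat_map. exists a1. split; [apply in_seq; lia|].
  apply in_map_iff. exists a2. split; [f_equal; lia|apply in_seq; lia].
Qed.

Lemma abs_mixed_nonneg p q f y : 0 <= abs_mixed p q f y.
Proof. apply sumR_nonneg; intros; apply sumR_nonneg; intros; apply Rabs_pos. Qed.

Lemma Rabs_mixed_le a b f y : Rabs (mixed a b f y) <= abs_mixed (msize a) (msize b) f y.
Proof.
  unfold abs_mixed.
  eapply Rle_trans; [|apply (sumR_ge_elem _ _ a (mindices_msize a))].
  - apply (sumR_ge_elem (fun be => Rabs (mixed a be f y)) _ b (mindices_msize b)).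
    intros; apply Rabs_pos.
  - intros; apply sumR_nonneg; intros; apply Rabs_pos.
Qed.

Definition abs_mixed_upto (p q : nat) f y := sumR (fun j => abs_mixed p j f y) (seq 0 (S q)).

Lemma abs_mixed_upto_nonneg p q f y : 0 <= abs_mixed_upto p q f y.
Proof. apply sumR_nonneg; intros; apply abs_mixed_nonneg. Qed.

Lemma word_bound w : word_ok w -> exists K, 0 <= K /\ forall A B f, regular (in_Omega A B) f ->
  forall y, in_Omega A B y ->
  Rabs (word_fun w f y) <= K * abs_mixed_upto (count_pd w) (count_pdbar w) f y.
Proof.
  intros Hw. destruct (normal_ordering w Hw) as [RL [HRL HE]]. rewrite Forall_forall in HRL.
  exists (sumR (fun x => Rabs (fst x)) RL). split; [apply sumR_nonneg; intros; apply Rabs_pos|].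
  intros A B f Hf y Hy. rewrite (HE (in_Omega A B) f (is_open_Omega A B) Hf y Hy). unfold lin_comb.
  eapply Rle_trans; [apply Rabs_sumR|].
  rewrite Rmult_comm, <- sumR_scal. apply sumR_le. intros x Hx.
  destruct (HRL x Hx) as [[a [b [Ex [Ha Hb]]]] _].
  rewrite Ex, <- mixed_normal_word, Rabs_mult.
  rewrite (Rmult_comm (abs_mixed_upto _ _ f y)). apply Rmult_le_compat_l; [apply Rabs_pos|].
  eapply Rle_trans; [apply Rabs_mixed_le|]. rewrite Ha.
  apply (sumR_ge_elem (fun j => abs_mixed (count_pd w) j f y)); [apply in_seq; lia|].
  intros; apply abs_mixed_nonneg.
Qed.

Definition rhs_main A B a nb f y :=
  sumR (fun j => sig_ A B y * abs_mixed (S a) j f y + abs_mixed a j f y) (seq 0 nb).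
Definition rhs_low a nb f y := sumR (fun j => abs_mixed (a - 1) j f y) (seq 0 (nb + 2)).

Lemma rhs_main_nonneg A B a nb f y : 0 < B -> in_Omega A B y -> 0 <= rhs_main A B a nb f y.
Proof.
  intros HB Hy. apply sumR_nonneg; intros.
  pose proof (sig_pos A B y HB Hy). pose proof (abs_mixed_nonneg (S a) x f y).
  pose proof (abs_mixed_nonneg a x f y). nra.
Qed.

Lemma rhs_low_nonneg a nb f y : 0 <= rhs_low a nb f y.
Proof. apply sumR_nonneg; intros; apply abs_mixed_nonneg. Qed.

Definition admissible (a nb : nat) (t : term) : Prop :=
  let '(_, k, w) := t in
  match k with
  | Sig => count_pd w = S a /\ (count_pdbar w + 1 <= nb)%nat
  | _ => (count_pd w = a /\ (count_pdbar w + 1 <= nb)%nat)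
         \/ ((count_pd w + 1 = a)%nat /\ (count_pdbar w <= nb + 1)%nat)
  end.

Lemma abs_mixed_upto_le_main A B a q nb f y : 0 < B -> in_Omega A B y -> (q + 1 <= nb)%nat ->
  abs_mixed_upto a q f y <= rhs_main A B a nb f y.
Proof.
  intros HB Hy Hq. pose proof (sig_pos A B y HB Hy). eapply Rle_trans.
  - apply (sumR_seq_mono (fun j => abs_mixed a j f y) (S q) nb); [lia|intros; apply abs_mixed_nonneg].
  - apply sumR_le; intros. pose proof (abs_mixed_nonneg (S a) x f y). nra.
Qed.

Lemma sig_abs_mixed_upto_le_main A B a q nb f y : 0 < B -> in_Omega A B y -> (q + 1 <= nb)%nat ->
  sig_ A B y * abs_mixed_upto (S a) q f y <= rhs_main A B a nb f y.
Proof.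
  intros HB Hy Hq. pose proof (sig_pos A B y HB Hy).
  unfold abs_mixed_upto. rewrite <- sumR_scal. eapply Rle_trans.
  - apply (sumR_seq_mono (fun j => sig_ A B y * abs_mixed (S a) j f y) (S q) nb); [lia|].
    intros; pose proof (abs_mixed_nonneg (S a) x f y); nra.
  - apply sumR_le; intros. pose proof (abs_mixed_nonneg a x f y). lra.
Qed.

Lemma abs_mixed_upto_le_low a q nb f y : (q <= nb + 1)%nat ->
  abs_mixed_upto (a - 1) q f y <= rhs_low a nb f y.
Proof.
  intros Hq. apply (sumR_seq_mono (fun j => abs_mixed (a - 1) j f y)); [lia|].
  intros; apply abs_mixed_nonneg.
Qed.

Lemma abs_mixed_upto_le_rhs A B a nb p q f y : 0 < B -> in_Omega A B y ->
  (p = a /\ (q + 1 <= nb)%nat) \/ ((p + 1 = a)%nat /\ (q <= nb + 1)%nat) ->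
  abs_mixed_upto p q f y <= rhs_main A B a nb f y + INR a * rhs_low a nb f y.
Proof.
  intros HB Hy [[-> Hq]|[Hp Hq]].
  - pose proof (abs_mixed_upto_le_main A B a q nb f y HB Hy Hq).
    pose proof (rhs_low_nonneg a nb f y). pose proof (pos_INR a). nra.
  - replace p with (a - 1)%nat by lia.
    pose proof (abs_mixed_upto_le_low a q nb f y Hq). pose proof (rhs_main_nonneg A B a nb f y HB Hy).
    pose proof (abs_mixed_upto_nonneg (a - 1) q f y).
    assert (1 <= INR a) by (apply (le_INR 1); lia). nra.
Qed.

Lemma coef_weight_le A B a nb c k w f y : 0 < A -> 0 < B -> in_Omega A B y -> coef_ok k ->
  admissible a nb (c, k, w) ->
  Rabs (coef_fun A B k y) * abs_mixed_upto (count_pd w) (count_pdbar w) f y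
  <= (1 + A / B) * (rhs_main A B a nb f y + INR a * rhs_low a nb f y).
Proof.
  intros HA HB Hy Hk Ha.
  pose proof (rhs_main_nonneg A B a nb f y HB Hy). pose proof (rhs_low_nonneg a nb f y).
  pose proof (pos_INR a). pose proof (abs_mixed_upto_nonneg (count_pd w) (count_pdbar w) f y).
  assert (HAB : 0 < A / B) by (apply Rdiv_lt_0_compat; auto).
  destruct k; simpl in Hk, Ha |- *.
  - pose proof (abs_mixed_upto_le_rhs A B a nb _ _ f y HB Hy Ha). rewrite Rabs_R1. nra.
  - pose proof (abs_mixed_upto_le_rhs A B a nb _ _ f y HB Hy Ha).
    pose proof (coord_bound A B y j HA HB Hy Hk). pose proof (Rabs_pos (coord y j)). nra.
  - destruct Ha as [Hd Hn]. pose proof (sig_pos A B y HB Hy).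
    rewrite Rabs_right, Hd by lra.
    pose proof (sig_abs_mixed_upto_le_main A B a _ nb f y HB Hy Hn).
    assert (0 <= A / B * rhs_main A B a nb f y) by (apply Rmult_le_pos; lra).
    assert (0 <= (1 + A / B) * (INR a * rhs_low a nb f y))
      by (apply Rmult_le_pos; [lra|apply Rmult_le_pos; auto]).
    nra.
Qed.

Lemma terms_bound A B a nb TL : 0 < A -> 0 < B ->
  List.Forall (fun t => admissible a nb t /\ term_ok t) TL ->
  exists C, 0 <= C /\ forall f, regular (in_Omega A B) f -> forall y, in_Omega A B y ->
  Rabs (terms_fun A B f TL y) <= C * rhs_main A B a nb f y + C * INR a * rhs_low a nb f y.
Proof.
  intros HA HB H. induction H as [|[[c k] w] TL [Ht [Hk Hw]] _ [C0 [HC0 H0]]].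
  - exists 0; split; [lra|]. intros f _ y _. unfold terms_fun, sumR; simpl. rewrite Rabs_R0. lra.
  - destruct (word_bound w Hw) as [K [HK HKb]].
    assert (HAB : 0 < A / B) by (apply Rdiv_lt_0_compat; auto).
    exists (Rabs c * K * (1 + A / B) + C0).
    split; [pose proof (Rabs_pos c); apply Rplus_le_le_0_compat; auto; apply Rmult_le_pos; nra|].
    intros f Hf y Hy.
    pose proof (H0 f Hf y Hy). pose proof (HKb A B f Hf y Hy).
    pose proof (coef_weight_le A B a nb c k w f y HA HB Hy Hk Ht).
    pose proof (Rabs_pos c). pose proof (Rabs_pos (coef_fun A B k y)).
    pose proof (rhs_main_nonneg A B a nb f y HB Hy). pose proof (rhs_low_nonneg a nb f y).
    pose proof (pos_INR a).
    set (X := abs_mixed_upto (count_pd w) (count_pdbar w) f y) in *.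
    set (Z := rhs_main A B a nb f y + INR a * rhs_low a nb f y) in *.
    assert (Hterm : Rabs (term_fun A B f (c, k, w) y) <= Rabs c * K * (1 + A / B) * Z).
    { unfold term_fun. rewrite !Rabs_mult.
      apply Rle_trans with (Rabs c * K * (Rabs (coef_fun A B k y) * X)).
      - replace (Rabs c * K * (Rabs (coef_fun A B k y) * X))
          with (Rabs c * Rabs (coef_fun A B k y) * (K * X)) by ring.
        apply Rmult_le_compat_l; auto. apply Rmult_le_pos; auto.
      - rewrite (Rmult_assoc (Rabs c * K)).
        apply Rmult_le_compat_l; [apply Rmult_le_pos|]; auto. }
    change (terms_fun A B f ((c, k, w) :: TL) y) with (term_fun A B f (c, k, w) y + terms_fun A B f TL y).
    eapply Rle_trans; [apply Rabs_triang|]. unfold Z in Hterm. nra.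
Qed.

Lemma pd_errors_admissible al be TL :
  List.Forall (pd_error_shape (length (mindex_axes al)) (pdbar_word be ++ [])) TL ->
  List.Forall term_ok TL -> List.Forall (fun t => admissible (msize al) (msize be) t /\ term_ok t) TL.
Proof.
  intros Hsh Hok. rewrite Forall_forall in Hsh, Hok |- *. intros [[c k] w] Ht. split; auto.
  destruct (Hsh _ Ht) as [-> [H1 H2]]. unfold pdbar_word in *. simpl.
  rewrite count_pd_app, count_pdbar_app, count_pd_map_OpB, count_pdbar_map_OpB,
    !mindex_axes_length in *.
  simpl in *. right; split; lia.
Qed.

Lemma pdbar_errors_admissible B al be TL :
  List.Forall (pdbar_error_shape (length (mindex_axes be)) []) TL -> List.Forall term_ok TL ->
  List.Forall (fun t => admissible (msize al) (msize be) t /\ term_ok t) (word_terms B (pd_word al) TL).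
Proof.
  intros Hsh Hok. rewrite mindex_axes_length in Hsh.
  assert (HI : List.Forall (propagated_shape (msize be) 0) TL).
  { eapply Forall_impl; [|exact Hsh]. intros [[c k] w] [H1 H2]. simpl in *.
    split; [lia|]. destruct k; auto; contradiction. }
  pose proof (propagated_shape_word_terms B (msize be) (mindex_axes al) 0 TL HI) as HI'.
  pose proof (word_terms_ok B (pd_word al) TL (pd_word_ok al) Hok) as Hok'.
  rewrite mindex_axes_length, Nat.add_0_r in HI'.
  rewrite Forall_forall in HI', Hok' |- *. intros [[c k] w] Ht. split; auto.
  destruct (HI' _ Ht) as [H1 H2].
  destruct k; simpl in *; [right; split; lia | left; split; lia | split; lia].
Qed.

Lemma commutator_as_terms iota A B al be k : 0 < B -> axis k ->
  exists TL, List.Forall (fun t => admissible (msize al) (msize be) t /\ term_ok t) TL /\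
  forall f, smooth_on A B f -> forall y, in_Omega A B y ->
    mixed al be (fun z => Rpower (sig_ A B z) (- iota) *
                          pd k (fun w => Rpower (sig_ A B w) (iota + 1) * f w) z) y
    - Rpower (sig_ A B y) (- iota - INR (msize al)) *
      pd k (fun w => Rpower (sig_ A B w) (iota + INR (msize al) + 1) * mixed al be f w) y
    = terms_fun A B f TL y.
Proof.
  intros HB Hk.
  set (La := mindex_axes al). set (M := mindex_axes be).
  assert (HLa : List.Forall axis La) by apply mindex_axes_axis.
  assert (HM : List.Forall axis M) by apply mindex_axes_axis.
  assert (HW : word_ok (map OpB M ++ [])) by (rewrite app_nil_r; apply word_ok_map_OpB; auto).
  destruct (telescope_pdbar iota A B k Hk M [] HM (List.Forall_nil _)) as [TLB [HshB [HokB HEB]]].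
  destruct (telescope_pd iota A B k Hk La (map OpB M ++ []) 0 HLa HW) as [TLE [HshE [HokE HEE]]].
  exists (TLE ++ word_terms B (map OpD La) TLB). split.
  - apply Forall_app; split; [apply pd_errors_admissible|apply pdbar_errors_admissible]; auto.
  - intros f Hsm y Hy.
    set (U := in_Omega A B). assert (HU : is_open U) by apply is_open_Omega.
    assert (Hf : regular U f) by (apply smooth_regular; auto).
    set (F0 := fun z => Rpower (sig_ A B z) (- iota) * pd k (fun w => Rpower (sig_ A B w) (iota + 1) * f w) z).
    set (Wt := weighted_pd_terms iota B k (length La) (map OpD La ++ map OpB M ++ [])).
    assert (E0 : eq_on U F0 (terms_fun A B f (weighted_pd_terms iota B k 0 []))).
    { intros z Hz. rewrite <- (weighted_pd_terms_fun iota A B k 0 [] f z); auto; [|constructor].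
      unfold F0. simpl INR. rewrite Rplus_0_r. reflexivity. }
    assert (E1 : eq_on U (word_fun (map OpB M) F0)
                   (terms_fun A B f (weighted_pd_terms iota B k 0 (map OpB M ++ []) ++ TLB))).
    { intros z Hz. rewrite (eq_on_word_fun U _ _ _ HU E0 z Hz), terms_fun_app.
      apply (HEB U f HU Hf z Hz). }
    assert (HokX : List.Forall term_ok (weighted_pd_terms iota B k 0 (map OpB M ++ []) ++ TLB))
      by (apply Forall_app; split; auto; apply weighted_pd_terms_ok; auto).
    assert (E2 : mixed al be F0 y = terms_fun A B f Wt y + terms_fun A B f TLE y
                                    + terms_fun A B f (word_terms B (map OpD La) TLB) y).
    { rewrite mixed_normal_word. unfold normal_word, pd_word, pdbar_word. fold La M.
      rewrite word_fun_app, (eq_on_word_fun U _ _ _ HU E1 y Hy).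
      rewrite (word_terms_fun U A B f (map OpD La) _ HU Hf (word_ok_map_OpD _ HLa) HokX y Hy).
      rewrite word_terms_app, terms_fun_app.
      rewrite <- (word_terms_fun U A B f (map OpD La) _ HU Hf (word_ok_map_OpD _ HLa)
                    (weighted_pd_terms_ok iota B k 0 _ Hk HW) y Hy).
      rewrite (HEE U f HU Hf y Hy). reflexivity. }
    assert (E3 : Rpower (sig_ A B y) (- iota - INR (msize al)) *
              pd k (fun w => Rpower (sig_ A B w) (iota + INR (msize al) + 1) * mixed al be f w) y =
              terms_fun A B f Wt y).
    { unfold Wt. rewrite app_nil_r. unfold La. rewrite mindex_axes_length.
      change (map OpD (mindex_axes al) ++ map OpB M) with (normal_word al be).
      rewrite <- (weighted_pd_terms_fun iota A B k (msize al) (normal_word al be) f y); auto;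
        [|apply normal_word_ok].
      replace (- iota - INR (msize al)) with (- (iota + INR (msize al))) by ring.
      rewrite <- mixed_normal_word. reflexivity. }
    fold F0. rewrite E2, E3, terms_fun_app. ring.
Qed.

Lemma commutator_estimate_axis iota A B al be k : 0 < A -> 0 < B -> axis k ->
  exists C, 0 <= C /\ forall f, smooth_on A B f -> forall y, in_Omega A B y ->
  Rabs (mixed al be (fun z => Rpower (sig_ A B z) (- iota) *
                              pd k (fun w => Rpower (sig_ A B w) (iota + 1) * f w) z) y
        - Rpower (sig_ A B y) (- iota - INR (msize al)) *
          pd k (fun w => Rpower (sig_ A B w) (iota + INR (msize al) + 1) * mixed al be f w) y)
  <= C * rhs_main A B (msize al) (msize be) f y
     + C * INR (msize al) * rhs_low (msize al) (msize be) f y.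
Proof.
  intros HA HB Hk.
  destruct (commutator_as_terms iota A B al be k HB Hk) as [TL [HTL HE]].
  destruct (terms_bound A B (msize al) (msize be) TL HA HB HTL) as [C [HC HCb]].
  exists C; split; auto. intros f Hf y Hy. rewrite HE by auto. apply HCb; auto.
  apply smooth_regular; auto.
Qed.

Theorem mainTheorem8 :
  forall (iota A B : R), 0 < iota -> 0 < A -> 0 < B ->
  forall (al be : mindex),
  exists C : R,
  forall f : pt -> R, smooth_on A B f ->
  forall k : nat, (1 <= k <= 3)%nat ->
  forall y : pt, in_Omega A B y ->
    Rabs (mixed al be
            (fun z => Rpower (sig_ A B z) (- iota) *
                      pd k (fun w => Rpower (sig_ A B w) (iota + 1) * f w) z) y
          - Rpower (sig_ A B y) (- iota - INR (msize al)) *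
            pd k (fun w => Rpower (sig_ A B w) (iota + INR (msize al) + 1)
                           * mixed al be f w) y)
    <= C * sumR (fun j => sig_ A B y * abs_mixed (S (msize al)) j f y
                          + abs_mixed (msize al) j f y) (seq 0 (msize be))
       + C * INR (msize al) *
         sumR (fun j => abs_mixed (msize al - 1) j f y) (seq 0 (msize be + 2)).
Proof.
  intros iota A B _ HA HB al be.
  destruct (commutator_estimate_axis iota A B al be 1 HA HB axis1) as [C1 [HC1 H1]].
  destruct (commutator_estimate_axis iota A B al be 2 HA HB axis2) as [C2 [HC2 H2]].
  destruct (commutator_estimate_axis iota A B al be 3 HA HB axis3) as [C3 [HC3 H3]].
  exists (C1 + C2 + C3). intros f Hf k Hk y Hy.
  fold (rhs_main A B (msize al) (msize be) f y) (rhs_low (msize al) (msize be) f y).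
  pose proof (rhs_main_nonneg A B (msize al) (msize be) f y HB Hy).
  assert (0 <= INR (msize al) * rhs_low (msize al) (msize be) f y)
    by (apply Rmult_le_pos; [apply pos_INR|apply rhs_low_nonneg]).
  destruct (axis_cases k Hk) as [?|[?|?]]; subst k;
    [pose proof (H1 f Hf y Hy)|pose proof (H2 f Hf y Hy)|pose proof (H3 f Hf y Hy)]; nra.
Qed.
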